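(* Let $X$ and $Y$ be random variables taking values in the non-negative integers with zero-inflated marginal cdfs $F(s)=(1-\pi_F)+\pi_F\bar F(s)$ and $G(t)=(1-\pi_G)+\pi_G\bar G(t)$ for $s,t\ge0$ (zero for negative arguments), where $\bar F,\bar G$ are discrete distribution functions. Let $p_1=\mathbb{P}[X=0]=F(0)$ and $p_2=\mathbb{P}[Y=0]=G(0)$. For a joint distribution $H$ of $(X,Y)$ with these marginals, let $\tau_A$ denote Kendall's $\tau$ of $(X,Y)$, i.e. $\tau_A=\mathbb{P}[(\tilde X_1-\tilde X_2)(\tilde Y_1-\tilde Y_2)>0]-\mathbb{P}[(\tilde X_1-\tilde X_2)(\tilde Y_1-\tilde Y_2)<0]$ for two independent copies $(\tilde X_1,\tilde Y_1),(\tilde X_2,\tilde Y_2)$ of $(X,Y)$. Let $\tilde s$ be a point with $F(\tilde s)>p_2$ and $F(\tilde s-1)\le p_2$; $\tilde t$ a point with $G(\tilde t)>p_1$ and $G(\tilde t-1)\le p_1$; $\tilde s'$ a point with $F(\tilde s')+p_2-1>0$ and $F(\tilde s'-1)+p_2-1\le 0$; $\tilde t'$ a point with $G(\tilde t')+p_1-1>0$ and $G(\tilde t'-1)+p_1-1\le0$. Let $p^U_{t_{11}}$ (resp. $p^L_{t_{11}}$) be the probability that, for two independent copies of $(X,Y)$ conditioned on $\{X>0,Y>0\}$, the $X$-components or the $Y$-components are tied, when $H$ is the upper Fréchet–Hoeffding bound $H(x,y)=\min\{F(x),G(y)\}$ (resp. the lower Fréchet–Hoeffding bound $H(x,y)=\max\{F(x)+G(y)-1,0\}$).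 Then, over joint distributions $H$ with marginals $F$ and $G$, the upper and lower bounds of $\tau_A$ are $$\tau_A^{upper}=\begin{cases}(1-p_2^2)-(1-p_2)^2p^U_{t_{11}}-2(p_2-F(\tilde s-1))(F(\tilde s)-p_2), & p_1\le p_2,\\ (1-p_1^2)-(1-p_1)^2p^U_{t_{11}}-2(p_1-G(\tilde t-1))(G(\tilde t)-p_1), & p_1\ge p_2,\end{cases}$$ $$\tau_A^{lower}=\begin{cases}-2(1-p_1)(1-p_2), & 1-p_1-p_2<0,\\ p_1^2+p_2^2-1+(1-p_1-p_2)^2p^L_{t_{11}}+2\big[(F(\tilde s')+p_2-1)(1-p_2-F(\tilde s'-1))+(G(\tilde t')+p_1-1)(1-p_1-G(\tilde t'-1))\big], & 1-p_1-p_2>0.\end{cases}$$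
   Context: The upper Fréchet–Hoeffding bound $\min\{F(x),G(y)\}$ and lower bound $\max\{F(x)+G(y)-1,0\}$ are the pointwise maximal and minimal joint cdfs with marginals $F$ and $G$. *)

From Stdlib Require Import Reals ZArith Bool.
From Coquelicot Require Import Coquelicot.
Open Scope R_scope.

Definition is_pmf (f : nat -> R) : Prop :=
  (forall k, 0 <= f k) /\ is_series f 1.

Definition cdf_of_pmf (f : nat -> R) (s : Z) : R :=
  if (s <? 0)%Z then 0 else sum_n f (Z.to_nat s).

Definition zi_cdf (pi : R) (Fbar : Z -> R) (s : Z) : R :=
  if (s <? 0)%Z then 0 else (1 - pi) + pi * Fbar s.

Definition is_joint_pmf (h : nat -> nat -> R) (F G : Z -> R) : Prop :=
  (forall x y, 0 <= h x y) /\
  (forall x, is_series (fun y => h x y)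
               (F (Z.of_nat x) - F (Z.of_nat x - 1)%Z)) /\
  (forall y, is_series (fun x => h x y)
               (G (Z.of_nat y) - G (Z.of_nat y - 1)%Z)).

Definition prob2 (h : nat -> nat -> R) (E : nat -> nat -> nat -> nat -> bool) : R :=
  Series (fun x1 => Series (fun y1 => Series (fun x2 => Series (fun y2 =>
    if E x1 y1 x2 y2 then h x1 y1 * h x2 y2 else 0)))).

Definition concordant (x1 y1 x2 y2 : nat) : bool :=
  (0 <? (Z.of_nat x1 - Z.of_nat x2) * (Z.of_nat y1 - Z.of_nat y2))%Z.

Definition discordant (x1 y1 x2 y2 : nat) : bool :=
  ((Z.of_nat x1 - Z.of_nat x2) * (Z.of_nat y1 - Z.of_nat y2) <? 0)%Z.

Definition kendall_tau_A (h : nat -> nat -> R) : R :=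
  prob2 h concordant - prob2 h discordant.

Definition pmf_of_cdf2 (C : Z -> Z -> R) (x y : nat) : R :=
  let s := Z.of_nat x in let t := Z.of_nat y in
  C s t - C (s - 1)%Z t - C s (t - 1)%Z + C (s - 1)%Z (t - 1)%Z.

Definition frechet_upper (F G : Z -> R) (s t : Z) : R := Rmin (F s) (G t).
Definition frechet_lower (F G : Z -> R) (s t : Z) : R := Rmax (F s + G t - 1) 0.

Definition both_pos (x1 y1 x2 y2 : nat) : bool :=
  (0 <? x1)%nat && (0 <? y1)%nat && (0 <? x2)%nat && (0 <? y2)%nat.

Definition tie (x1 y1 x2 y2 : nat) : bool :=
  Nat.eqb x1 x2 || Nat.eqb y1 y2.

Definition cond_tie_prob (h : nat -> nat -> R) : R :=
  prob2 h (fun x1 y1 x2 y2 => both_pos x1 y1 x2 y2 && tie x1 y1 x2 y2)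
  / prob2 h both_pos.

Definition tau_A_max (F G : Z -> R) (v : R) : Prop :=
  (forall h, is_joint_pmf h F G -> kendall_tau_A h <= v) /\
  (exists h, is_joint_pmf h F G /\ kendall_tau_A h = v).

Definition tau_A_min (F G : Z -> R) (v : R) : Prop :=
  (forall h, is_joint_pmf h F G -> v <= kendall_tau_A h) /\
  (exists h, is_joint_pmf h F G /\ kendall_tau_A h = v).

(* Kendall's tau is [E k - 1] for the kernel [k = grade a c * grade b d] evaluated on two
   independent copies, where [grade] weighs a strict inequality 2 and a tie 1.  Integrating
   out one copy, [E_(h x g) k] is the [h]-expectation of a sum of four values of the joint cdf
   of [g]; it is therefore increasing in that cdf, and symmetric in [h, g] when the marginals
   agree.  So [tau] is increasing in the concordance order, and the Frechet-Hoeffding bounds,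
   being the pointwise extremal joint cdfs, are where [tau] attains its extrema.  Their values
   are read off their supports: the upper bound has no discordant pairs and the lower bound no
   concordant pairs, the ties inside [{X > 0, Y > 0}] give the [p_t11] term, and outside that
   quadrant the support is a staircase on the axes whose ties are counted directly. *)

From Stdlib Require Import Reals ZArith Lra Lia Bool List FunctionalExtensionality.
From Coquelicot Require Import Coquelicot.
Open Scope R_scope.

Lemma sum_n_succ (a : nat -> R) n : sum_n a (S n) = sum_n a n + a (S n) :> R.
Proof. rewrite sum_Sn; reflexivity. Qed.

Lemma sum_n_nonneg (a : nat -> R) N : (forall n, 0 <= a n) -> 0 <= sum_n a N.
Proof.
  intro Ha; induction N as [|N IH]; [rewrite sum_O; apply Ha|].
  rewrite sum_n_succ; specialize (Ha (S N)); lra.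
Qed.

Lemma sum_n_le_compat (a b : nat -> R) N : (forall n, a n <= b n) -> sum_n a N <= sum_n b N.
Proof.
  intro Hab; induction N as [|N IH]; [rewrite !sum_O; apply Hab|].
  rewrite !sum_n_succ; specialize (Hab (S N)); lra.
Qed.

Lemma sum_n_le_sum_n (a : nat -> R) N M :
  (forall n, 0 <= a n) -> (N <= M)%nat -> sum_n a N <= sum_n a M.
Proof.
  intros Ha HNM; induction HNM as [|M _ IH]; [lra|].
  rewrite sum_n_succ; specialize (Ha (S M)); lra.
Qed.

Lemma sum_n_telescope (u : Z -> R) N :
  sum_n (fun n => u (Z.of_nat n) - u (Z.of_nat n - 1)%Z) N = u (Z.of_nat N) - u (-1)%Z :> R.
Proof.
  induction N as [|N IH]; [rewrite sum_O; reflexivity|].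
  rewrite sum_n_succ, IH.
  replace (Z.of_nat (S N) - 1)%Z with (Z.of_nat N) by lia.
  ring.
Qed.

Lemma is_series_finite (a : nat -> R) N :
  (forall n, (N < n)%nat -> a n = 0) -> is_series a (sum_n a N).
Proof.
  intro Ha; change (is_lim_seq (sum_n a) (sum_n a N)).
  apply is_lim_seq_ext_loc with (fun _ => sum_n a N); [|apply is_lim_seq_const].
  exists N; intros n Hn; induction Hn as [|n Hn IH]; [reflexivity|].
  rewrite sum_n_succ, Ha by lia; lra.
Qed.

Lemma Series_zero : Series (fun _ => 0) = 0.
Proof.
  pose proof (is_series_finite (fun _ => 0) 0 (fun _ _ => eq_refl)) as H.
  rewrite sum_O in H; exact (is_series_unique _ _ H).
Qed.

Lemma Series_indicator_nat (v : R) k : Series (fun n => if Nat.eqb n k then v else 0) = v.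
Proof.
  set (a := fun n => if Nat.eqb n k then v else 0).
  assert (Hk : sum_n a k = v).
  { rewrite sum_n_Reals; unfold a; destruct k as [|k]; simpl; [reflexivity|].
    rewrite Nat.eqb_refl, sum_eq_R0; [ring|].
    intros n Hn; destruct (Nat.eqb_spec n (S k)); [lia|reflexivity]. }
  pose proof (is_series_finite a k) as Ha; rewrite Hk in Ha.
  apply is_series_unique, Ha; intros n Hn; unfold a.
  destruct (Nat.eqb_spec n k); [lia|reflexivity].
Qed.

Lemma ex_series_plus_R (a b : nat -> R) :
  ex_series a -> ex_series b -> ex_series (fun n => a n + b n).
Proof. apply (@ex_series_plus R_AbsRing R_NormedModule). Qed.

Lemma ex_series_scal_R (c : R) (a : nat -> R) : ex_series a -> ex_series (fun n => c * a n).
Proof. apply (@ex_series_scal R_AbsRing R_NormedModule). Qed.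

Lemma ex_series_dominated (a b : nat -> R) :
  (forall n, 0 <= a n <= b n) -> ex_series b -> ex_series a.
Proof.
  intro Hab; apply (@ex_series_le R_AbsRing R_CompleteNormedModule); intro n; specialize (Hab n).
  change (Rabs (a n) <= b n); rewrite Rabs_pos_eq; lra.
Qed.

Lemma Series_nonneg (a : nat -> R) : (forall n, 0 <= a n) -> ex_series a -> 0 <= Series a.
Proof.
  intros Ha Ea; rewrite <- Series_zero; apply Series_le; [|exact Ea].
  intro n; specialize (Ha n); lra.
Qed.

Lemma sum_n_le_Series (a : nat -> R) :
  (forall n, 0 <= a n) -> ex_series a -> forall N, sum_n a N <= Series a.
Proof.
  intros Ha [l Hl] N; rewrite (is_series_unique _ _ Hl).
  apply (is_lim_seq_incr_compare (sum_n a)); [exact Hl|].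
  intro n; rewrite sum_n_succ; specialize (Ha (S n)); lra.
Qed.

Lemma term_le_Series (a : nat -> R) :
  (forall n, 0 <= a n) -> ex_series a -> forall n, a n <= Series a.
Proof.
  intros Ha Ea [|n].
  - pose proof (sum_n_le_Series a Ha Ea 0) as H; rewrite sum_O in H; exact H.
  - pose proof (sum_n_le_Series a Ha Ea (S n)) as H; rewrite sum_n_succ in H.
    pose proof (sum_n_nonneg a n Ha); lra.
Qed.

Lemma ex_series_bounded_nonneg (a : nat -> R) B :
  (forall n, 0 <= a n) -> (forall N, sum_n a N <= B) -> ex_series a /\ Series a <= B.
Proof.
  intros Ha HB.
  assert (Hinc : forall n, sum_n a n <= sum_n a (S n)) by (intro; apply sum_n_le_sum_n; auto).
  destruct (ex_finite_lim_seq_incr _ _ Hinc HB) as [l Hl].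
  split; [now exists l|].
  rewrite (is_series_unique a l Hl).
  apply (is_lim_seq_le _ _ _ _ HB Hl (is_lim_seq_const B)).
Qed.

Lemma Series_sum_n_comm (a : nat -> nat -> R) N :
  (forall i, ex_series (a i)) ->
  ex_series (fun j => sum_n (fun i => a i j) N) /\
  Series (fun j => sum_n (fun i => a i j) N) = sum_n (fun i => Series (a i)) N.
Proof.
  intro Ea; induction N as [|N [Ex Eq]].
  - assert (H0 : forall j, a 0%nat j = sum_n (fun i => a i j) 0)
      by (intro; rewrite sum_O; reflexivity).
    rewrite sum_O, <- (Series_ext _ _ H0); split; [apply (ex_series_ext _ _ H0), Ea|reflexivity].
  - assert (HS : forall j, sum_n (fun i => a i j) (S N) = sum_n (fun i => a i j) N + a (S N) j)
      by (intro; apply sum_n_succ).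
    rewrite (Series_ext _ _ HS), Series_plus, Eq, sum_n_succ by auto; split; [|reflexivity].
    apply (ex_series_ext _ _ (fun j => eq_sym (HS j))), ex_series_plus_R; auto.
Qed.

Definition Series2 (t : nat -> nat -> R) : R := Series (fun x => Series (t x)).

Definition ex_series2 (t : nat -> nat -> R) : Prop :=
  (forall x, ex_series (t x)) /\ ex_series (fun x => Series (t x)).

Lemma Series2_ext (t u : nat -> nat -> R) : (forall x y, t x y = u x y) -> Series2 t = Series2 u.
Proof. intro H; apply Series_ext; intro x; apply Series_ext; intro y; apply H. Qed.

Lemma Series2_nonneg (t : nat -> nat -> R) :
  (forall x y, 0 <= t x y) -> ex_series2 t -> 0 <= Series2 t.
Proof.
  intros Ht [Ex Eo]; apply Series_nonneg; [|exact Eo].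
  intro x; apply Series_nonneg; auto.
Qed.

Lemma Series2_swap (t : nat -> nat -> R) :
  (forall x y, 0 <= t x y) -> ex_series2 t ->
  ex_series2 (fun y x => t x y) /\ Series2 (fun y x => t x y) = Series2 t.
Proof.
  intros Ht [Ex Eo]; unfold ex_series2, Series2.
  set (L := Series (fun x => Series (t x))).
  assert (Sx : forall x, 0 <= Series (t x)) by (intro; apply Series_nonneg; auto).
  assert (Ey : forall y, ex_series (fun x => t x y)).
  { intro y; apply (ex_series_bounded_nonneg _ L); [auto|].
    intro N; apply Rle_trans with (sum_n (fun x => Series (t x)) N).
    - apply sum_n_le_compat; intro x; apply term_le_Series; auto.
    - apply sum_n_le_Series; auto. }
  assert (Sy : forall y, 0 <= Series (fun x => t x y)) by (intro; apply Series_nonneg; auto).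
  destruct (ex_series_bounded_nonneg _ L Sy) as [Eo' Le1].
  { intro M; destruct (Series_sum_n_comm (fun y x => t x y) M Ey) as [_ <-].
    apply Series_le; [|exact Eo]; intro x; split.
    - apply sum_n_nonneg; auto.
    - apply sum_n_le_Series; auto. }
  destruct (ex_series_bounded_nonneg _ (Series (fun y => Series (fun x => t x y))) Sx) as [_ Le2].
  { intro N; destruct (Series_sum_n_comm t N Ex) as [_ <-].
    apply Series_le; [|exact Eo']; intro y; split.
    - apply sum_n_nonneg; auto.
    - apply (sum_n_le_Series (fun x => t x y)); auto. }
  repeat split; auto; fold L in Le2 |- *; lra.
Qed.

Lemma Series2_plus (t u : nat -> nat -> R) :
  ex_series2 t -> ex_series2 u -> Series2 (fun x y => t x y + u x y) = Series2 t + Series2 u.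
Proof.
  intros [Et Eto] [Eu Euo]; unfold Series2; rewrite <- Series_plus by auto.
  apply Series_ext; intro x; apply Series_plus; auto.
Qed.

Lemma ex_series2_plus (t u : nat -> nat -> R) :
  ex_series2 t -> ex_series2 u -> ex_series2 (fun x y => t x y + u x y).
Proof.
  intros [Et Eto] [Eu Euo]; split; [intro x; apply ex_series_plus_R; auto|].
  apply (ex_series_ext (fun x => Series (t x) + Series (u x))); [|apply ex_series_plus_R; auto].
  intro x; symmetry; apply Series_plus; auto.
Qed.

Lemma Series2_le (t u : nat -> nat -> R) :
  (forall x y, 0 <= t x y <= u x y) -> ex_series2 u -> Series2 t <= Series2 u.
Proof.
  intros Htu [Eu Euo]; apply Series_le; [|exact Euo]; intro x; split.
  - apply Series_nonneg; [intro; apply Htu|apply (ex_series_dominated _ (u x)); auto].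
  - apply Series_le; auto.
Qed.
Lemma Series2_scal (k : R) (t : nat -> nat -> R) :
  Series2 (fun x y => k * t x y) = k * Series2 t.
Proof.
  unfold Series2; rewrite <- Series_scal_l; apply Series_ext; intro x.
  apply Series_scal_l.
Qed.

Lemma ex_series2_dominated (t u : nat -> nat -> R) :
  (forall x y, 0 <= t x y <= u x y) -> ex_series2 u -> ex_series2 t.
Proof.
  intros Htu [Eu Euo].
  assert (Et : forall x, ex_series (t x)) by (intro x; apply (ex_series_dominated _ (u x)); auto).
  split; [exact Et|]; apply (ex_series_dominated _ (fun x => Series (u x))); [|exact Euo].
  intro x; split.
  - apply Series_nonneg; [intro; apply Htu|auto].
  - apply Series_le; auto.
Qed.

Lemma ex_series2_scal (k : R) (t : nat -> nat -> R) :
  ex_series2 t -> ex_series2 (fun x y => k * t x y).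
Proof.
  intros [Et Eto]; split; [intro; apply ex_series_scal_R; auto|].
  apply (ex_series_ext (fun x => k * Series (t x))); [|apply ex_series_scal_R; auto].
  intro x; symmetry; apply Series_scal_l.
Qed.

Definition Series4 (t : nat -> nat -> nat -> nat -> R) : R :=
  Series2 (fun a b => Series2 (t a b)).

Definition ex_series4 (t : nat -> nat -> nat -> nat -> R) : Prop :=
  (forall a b, ex_series2 (t a b)) /\ ex_series2 (fun a b => Series2 (t a b)).

Lemma Series4_ext (t u : nat -> nat -> nat -> nat -> R) :
  (forall a b c d, t a b c d = u a b c d) -> Series4 t = Series4 u.
Proof. intro H; apply Series2_ext; intros a b; apply Series2_ext; intros c d; apply H. Qed.

Lemma Series4_plus (t u : nat -> nat -> nat -> nat -> R) :
  ex_series4 t -> ex_series4 u ->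
  Series4 (fun a b c d => t a b c d + u a b c d) = Series4 t + Series4 u.
Proof.
  intros [Et Eto] [Eu Euo]; unfold Series4; rewrite <- Series2_plus by auto.
  apply Series2_ext; intros a b; apply Series2_plus; auto.
Qed.

Lemma Series4_scal (k : R) (t : nat -> nat -> nat -> nat -> R) :
  Series4 (fun a b c d => k * t a b c d) = k * Series4 t.
Proof.
  unfold Series4; rewrite <- Series2_scal; apply Series2_ext; intros a b.
  apply Series2_scal.
Qed.

Lemma Series4_le (t u : nat -> nat -> nat -> nat -> R) :
  (forall a b c d, 0 <= t a b c d <= u a b c d) -> ex_series4 u -> Series4 t <= Series4 u.
Proof.
  intros Htu [Eu Euo]; apply Series2_le; [|exact Euo]; intros a b; split.
  - apply Series2_nonneg; [intros; apply Htu|].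
    apply (ex_series2_dominated _ (u a b)); auto.
  - apply Series2_le; auto.
Qed.

Section Series4_nonneg.

Variable t : nat -> nat -> nat -> nat -> R.
Hypothesis t_ge0 : forall a b c d, 0 <= t a b c d.
Hypothesis t_ex : ex_series4 t.

Let S1_ge0 a b c : 0 <= Series (t a b c).
Proof. apply Series_nonneg; [auto|apply (proj1 t_ex)]. Qed.

Let S2_ge0 a b : 0 <= Series2 (t a b).
Proof. apply Series2_nonneg; [auto|apply (proj1 t_ex)]. Qed.

Lemma Series4_swap_coordinates : Series4 (fun a b c d => t b a d c) = Series4 t.
Proof.
  destruct t_ex as [Ei Eo]; unfold Series4.
  destruct (Series2_swap _ (fun a b => S2_ge0 a b) Eo) as [_ <-].
  apply Series2_ext; intros b a.
  apply (Series2_swap (t a b)); auto.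
Qed.

(* Summation orders abcd -> acbd -> acdb -> cadb -> cdab, each step a [Series2_swap]. *)
Lemma Series4_swap_pairs : Series4 (fun c d a b => t a b c d) = Series4 t.
Proof.
  destruct t_ex as [Ei [Eoi Eoo]].
  assert (Sw1 : forall a, ex_series2 (fun c b => Series (t a b c)) /\
    Series2 (fun c b => Series (t a b c)) = Series2 (fun b c => Series (t a b c))).
  { intro a; apply Series2_swap; [intros; apply S1_ge0|].
    split; [intro b; apply Ei|apply Eoi]. }
  assert (Sw2 : forall a c, ex_series2 (fun d b => t a b c d) /\
    Series2 (fun d b => t a b c d) = Series2 (fun b d => t a b c d)).
  { intros a c; apply Series2_swap; [auto|].
    split; [intro b; apply Ei|apply (proj1 (Sw1 a))]. }
  set (v a c := Series2 (fun d b => t a b c d)).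
  assert (Ev : forall a, ex_series (v a)).
  { intro a; apply (ex_series_ext (fun c => Series (fun b => Series (t a b c)))).
    - intro c; symmetry; apply Sw2.
    - apply (proj1 (Sw1 a)). }
  assert (Sv : forall a, Series (v a) = Series2 (fun b c => Series (t a b c))).
  { intro a; rewrite <- (proj2 (Sw1 a)); apply Series_ext; intro c; apply Sw2. }
  assert (Sw3 : ex_series2 (fun c a => v a c) /\ Series2 (fun c a => v a c) = Series2 v).
  { apply Series2_swap.
    - intros a c; apply Series2_nonneg; [intros; apply t_ge0|apply Sw2].
    - split; [exact Ev|apply (ex_series_ext _ _ (fun a => eq_sym (Sv a))), Eoo]. }
  assert (Sw4 : forall c,
    Series2 (fun d a => Series (fun b => t a b c d)) = Series (fun a => v a c)).
  { intro c; apply Series2_swap.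
    - intros; apply Series_nonneg; [auto|apply Sw2].
    - split; [intro a; apply Sw2|apply Sw3]. }
  unfold Series4; transitivity (Series2 (fun c a => v a c)).
  - apply Series_ext; intro c; apply Sw4.
  - rewrite (proj2 Sw3); apply Series_ext; intro a; apply Sv.
Qed.

End Series4_nonneg.

Definition is_pmf2 (h : nat -> nat -> R) : Prop :=
  (forall x y, 0 <= h x y) /\ ex_series2 h /\ Series2 h = 1.

Definition b2R (b : bool) : R := if b then 1 else 0.

Lemma b2R_bounds b : 0 <= b2R b <= 1.
Proof. destruct b; simpl; lra. Qed.

Lemma b2R_andb a b : b2R (a && b) = b2R a * b2R b.
Proof. destruct a, b; simpl; ring. Qed.

Definition expect2 (h g : nat -> nat -> R) (phi : nat -> nat -> nat -> nat -> R) : R :=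
  Series4 (fun a b c d => phi a b c d * h a b * g c d).

Definition mass (h : nat -> nat -> R) (A : nat -> nat -> bool) : R :=
  Series2 (fun x y => b2R (A x y) * h x y).

Lemma prob2_expect2 h E : prob2 h E = expect2 h h (fun a b c d => b2R (E a b c d)).
Proof.
  apply Series4_ext; intros a b c d; unfold b2R.
  destruct (E a b c d); ring.
Qed.

Lemma expect2_ext_supp h g (phi psi : nat -> nat -> nat -> nat -> R) :
  (forall a b c d, h a b <> 0 -> g c d <> 0 -> phi a b c d = psi a b c d) ->
  expect2 h g phi = expect2 h g psi.
Proof.
  intro H; apply Series4_ext; intros a b c d.
  destruct (Req_dec (h a b) 0) as [E|E]; [rewrite E; ring|].
  destruct (Req_dec (g c d) 0) as [E'|E']; [rewrite E'; ring|].
  rewrite H; auto.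
Qed.

Lemma expect2_ext h g (phi psi : nat -> nat -> nat -> nat -> R) :
  (forall a b c d, phi a b c d = psi a b c d) -> expect2 h g phi = expect2 h g psi.
Proof. intro H; apply expect2_ext_supp; auto. Qed.

Lemma expect2_scal h g (k : R) phi :
  expect2 h g (fun a b c d => k * phi a b c d) = k * expect2 h g phi.
Proof. unfold expect2; rewrite <- Series4_scal; apply Series4_ext; intros; ring. Qed.

Lemma expect2_inner h g phi : expect2 h g phi =
  Series2 (fun a b => h a b * Series2 (fun c d => phi a b c d * g c d)).
Proof.
  apply Series2_ext; intros a b; rewrite <- Series2_scal.
  apply Series2_ext; intros c d; ring.
Qed.

Section Expect2.

Variables h g : nat -> nat -> R.
Hypotheses (h_pmf : is_pmf2 h) (g_pmf : is_pmf2 g).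

Lemma ex_series4_pmf_dominated (t : nat -> nat -> nat -> nat -> R) B :
  (forall a b c d, 0 <= t a b c d <= B * h a b * g c d) -> ex_series4 t.
Proof.
  destruct h_pmf as [h_ge0 [Eh _]], g_pmf as [g_ge0 [Eg Sg]]; intro Ht.
  assert (Ei : forall a b, ex_series2 (t a b)).
  { intros a b; apply (ex_series2_dominated _ (fun c d => B * h a b * g c d)); [auto|].
    apply ex_series2_scal, Eg. }
  split; [exact Ei|].
  apply (ex_series2_dominated _ (fun a b => B * h a b)); [|apply ex_series2_scal, Eh].
  intros a b; split; [apply Series2_nonneg; [intros; apply Ht|auto]|].
  rewrite <- (Rmult_1_r (B * h a b)), <- Sg, <- Series2_scal.
  apply Series2_le; [auto|apply ex_series2_scal, Eg].
Qed.

Section Bounded.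

Variables (phi : nat -> nat -> nat -> nat -> R) (B : R).
Hypothesis phi_bounds : forall a b c d, 0 <= phi a b c d <= B.

Lemma expect2_integrand_ge0 a b c d : 0 <= phi a b c d * h a b * g c d.
Proof.
  destruct h_pmf as [h_ge0 _], g_pmf as [g_ge0 _].
  apply Rmult_le_pos; [apply Rmult_le_pos|]; auto; apply phi_bounds.
Qed.

Lemma ex_series4_expect2 : ex_series4 (fun a b c d => phi a b c d * h a b * g c d).
Proof.
  destruct h_pmf as [h_ge0 _], g_pmf as [g_ge0 _].
  apply (ex_series4_pmf_dominated _ B); intros a b c d; split; [apply expect2_integrand_ge0|].
  rewrite !Rmult_assoc; apply Rmult_le_compat_r; [apply Rmult_le_pos; auto|apply phi_bounds].
Qed.

Lemma expect2_swap : expect2 h g phi = expect2 g h (fun a b c d => phi c d a b).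
Proof.
  unfold expect2; rewrite <- Series4_swap_pairs.
  - apply Series4_ext; intros; ring.
  - apply expect2_integrand_ge0.
  - apply ex_series4_expect2.
Qed.

End Bounded.

Lemma expect2_plus phi psi B C :
  (forall a b c d, 0 <= phi a b c d <= B) -> (forall a b c d, 0 <= psi a b c d <= C) ->
  expect2 h g (fun a b c d => phi a b c d + psi a b c d) = expect2 h g phi + expect2 h g psi.
Proof.
  intros Hphi Hpsi; unfold expect2.
  rewrite <- Series4_plus by (eapply ex_series4_expect2; eauto).
  apply Series4_ext; intros; ring.
Qed.

Lemma expect2_le phi psi B :
  (forall a b c d, 0 <= phi a b c d <= psi a b c d) -> (forall a b c d, psi a b c d <= B) ->
  expect2 h g phi <= expect2 h g psi.
Proof.
  intros Hle HB.
  assert (Hpsi : forall a b c d, 0 <= psi a b c d <= B)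
    by (intros a b c d; specialize (Hle a b c d); specialize (HB a b c d); lra).
  apply Series4_le; [|apply (ex_series4_expect2 _ B Hpsi)]; intros a b c d; split.
  - apply (expect2_integrand_ge0 phi B); intros a' b' c' d'.
    specialize (Hle a' b' c' d'); specialize (HB a' b' c' d'); lra.
  - destruct h_pmf as [h_ge0 _], g_pmf as [g_ge0 _].
    apply Rmult_le_compat_r; [auto|apply Rmult_le_compat_r; [auto|apply Hle]].
Qed.

Lemma expect2_const (k : R) : expect2 h g (fun _ _ _ _ => k) = k.
Proof.
  destruct h_pmf as [_ [_ Sh]], g_pmf as [_ [_ Sg]].
  rewrite expect2_inner; transitivity (k * Series2 h); [|rewrite Sh; ring].
  rewrite <- Series2_scal; apply Series2_ext; intros a b.
  rewrite Series2_scal, Sg; ring.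
Qed.

End Expect2.

Lemma prob2_ext_supp h (E E' : nat -> nat -> nat -> nat -> bool) :
  (forall a b c d, h a b <> 0 -> h c d <> 0 -> E a b c d = E' a b c d) -> prob2 h E = prob2 h E'.
Proof.
  intro H; rewrite !prob2_expect2; apply expect2_ext_supp.
  intros a b c d Hab Hcd; rewrite H; auto.
Qed.

Lemma prob2_ext h (E E' : nat -> nat -> nat -> nat -> bool) :
  (forall a b c d, E a b c d = E' a b c d) -> prob2 h E = prob2 h E'.
Proof. intro H; apply prob2_ext_supp; auto. Qed.

Lemma prob2_false h : prob2 h (fun _ _ _ _ => false) = 0.
Proof.
  rewrite prob2_expect2, <- (Rmult_0_l (expect2 h h (fun _ _ _ _ => 1))), <- expect2_scal.
  apply Series4_ext; intros; simpl; ring.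
Qed.

Lemma expect2_b2R_mul h g (A B : nat -> nat -> bool) :
  expect2 h g (fun a b c d => b2R (A a b) * b2R (B c d)) = mass h A * mass g B.
Proof.
  rewrite expect2_inner.
  transitivity (Series2 (fun a b => b2R (A a b) * h a b * mass g B)).
  - apply Series2_ext; intros a b; unfold mass; rewrite <- !Series2_scal.
    apply Series2_ext; intros c d; ring.
  - change (mass h A) with (Series2 (fun x y => b2R (A x y) * h x y)).
    rewrite (Rmult_comm (Series2 _)), <- Series2_scal.
    apply Series2_ext; intros; ring.
Qed.

Lemma mass_ext_supp h (A B : nat -> nat -> bool) :
  (forall x y, h x y <> 0 -> A x y = B x y) -> mass h A = mass h B.
Proof.
  intro H; apply Series2_ext; intros x y.
  destruct (Req_dec (h x y) 0) as [E|E]; [rewrite E; ring|rewrite H; auto].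
Qed.

Lemma mass_ext h (A B : nat -> nat -> bool) : (forall x y, A x y = B x y) -> mass h A = mass h B.
Proof. intro H; apply mass_ext_supp; auto. Qed.

Lemma mass_false h : mass h (fun _ _ => false) = 0.
Proof.
  unfold mass; rewrite <- (Rmult_0_l (Series2 h)), <- Series2_scal.
  apply Series2_ext; intros; simpl; ring.
Qed.

Lemma mass_point h n k : mass h (fun x y => Nat.eqb x n && Nat.eqb y k) = h n k.
Proof.
  rewrite <- (Series_indicator_nat (h n k) n); apply Series_ext; intro x.
  destruct (Nat.eqb_spec x n) as [->|Hx].
  - rewrite <- (Series_indicator_nat (h n k) k); apply Series_ext; intro y.
    destruct (Nat.eqb_spec y k) as [->|]; simpl; ring.
  - rewrite <- Series_zero; apply Series_ext; intro y; simpl; ring.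
Qed.

Section Pmf2.

Variable h : nat -> nat -> R.
Hypothesis h_pmf : is_pmf2 h.

Lemma ex_series2_mass (A : nat -> nat -> bool) : ex_series2 (fun x y => b2R (A x y) * h x y).
Proof.
  destruct h_pmf as [h_ge0 [Eh _]]; apply (ex_series2_dominated _ h); [|exact Eh].
  intros x y; pose proof (b2R_bounds (A x y)); pose proof (h_ge0 x y); split; nra.
Qed.

Lemma mass_true : mass h (fun _ _ => true) = 1.
Proof.
  destruct h_pmf as [_ [_ Sh]]; rewrite <- Sh; apply Series2_ext; intros; simpl; ring.
Qed.

Lemma mass_le (A B : nat -> nat -> bool) :
  (forall x y, A x y = true -> B x y = true) -> mass h A <= mass h B.
Proof.
  intro H; apply Series2_le; [|apply ex_series2_mass]; intros x y.
  destruct h_pmf as [h_ge0 _]; specialize (h_ge0 x y); specialize (H x y).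
  destruct (A x y), (B x y); simpl; try lra; discriminate (H eq_refl).
Qed.

Lemma mass_ge0 A : 0 <= mass h A.
Proof. rewrite <- (mass_false h); apply mass_le; discriminate. Qed.

Lemma mass_le1 A : mass h A <= 1.
Proof. rewrite <- mass_true; apply mass_le; reflexivity. Qed.

Lemma mass_orb_andb (A B : nat -> nat -> bool) :
  mass h (fun x y => A x y || B x y) + mass h (fun x y => A x y && B x y) = mass h A + mass h B.
Proof.
  unfold mass; rewrite <- !Series2_plus by apply ex_series2_mass.
  apply Series2_ext; intros x y; destruct (A x y), (B x y); simpl; ring.
Qed.

Lemma mass_negb A : mass h (fun x y => negb (A x y)) = 1 - mass h A.
Proof.
  pose proof (mass_orb_andb A (fun x y => negb (A x y))) as E.
  rewrite (mass_ext h _ (fun _ _ => true)), (mass_ext h (fun x y => A x y && _) (fun _ _ => false)),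
    mass_true, mass_false in E by (intros x y; destruct (A x y); reflexivity).
  lra.
Qed.

Lemma prob2_ge0 E : 0 <= prob2 h E.
Proof.
  rewrite prob2_expect2, <- (expect2_const h h h_pmf h_pmf 0).
  apply (expect2_le h h h_pmf h_pmf _ _ 1); intros; pose proof (b2R_bounds (E a b c d)); lra.
Qed.

Lemma prob2_le (E E' : nat -> nat -> nat -> nat -> bool) :
  (forall a b c d, E a b c d = true -> E' a b c d = true) -> prob2 h E <= prob2 h E'.
Proof.
  intro H; rewrite !prob2_expect2; apply (expect2_le h h h_pmf h_pmf _ _ 1).
  - intros a b c d; specialize (H a b c d).
    destruct (E a b c d), (E' a b c d); simpl; try lra; discriminate (H eq_refl).
  - intros; apply b2R_bounds.
Qed.

Lemma prob2_orb (E E' : nat -> nat -> nat -> nat -> bool) :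
  (forall a b c d, E a b c d && E' a b c d = false) ->
  prob2 h (fun a b c d => E a b c d || E' a b c d) = prob2 h E + prob2 h E'.
Proof.
  intro H; rewrite !prob2_expect2, <- (expect2_plus h h h_pmf h_pmf _ _ 1 1)
    by (intros; apply b2R_bounds).
  apply Series4_ext; intros a b c d; specialize (H a b c d).
  destruct (E a b c d), (E' a b c d); simpl in *; try discriminate; ring.
Qed.

End Pmf2.

Definition is_cdf (F : Z -> R) : Prop :=
  (forall s, (s < 0)%Z -> F s = 0) /\ (forall s t, (s <= t)%Z -> F s <= F t) /\
  is_lim_seq (fun n => F (Z.of_nat n)) 1.

Definition pmf_of_cdf (F : Z -> R) (x : nat) : R := F (Z.of_nat x) - F (Z.of_nat x - 1)%Z.

Definition cdf_of_pmf2 (h : nat -> nat -> R) (a b : Z) : R :=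
  mass h (fun x y => Z.leb (Z.of_nat x) a && Z.leb (Z.of_nat y) b).

Lemma Series_partial_telescope (u : Z -> R) a : (forall s, (s < 0)%Z -> u s = 0) ->
  Series (fun x => b2R (Z.leb (Z.of_nat x) a) * (u (Z.of_nat x) - u (Z.of_nat x - 1)%Z)) = u a.
Proof.
  intro Hu; set (t x := b2R (Z.leb (Z.of_nat x) a) * (u (Z.of_nat x) - u (Z.of_nat x - 1)%Z)).
  destruct (Z_lt_le_dec a 0) as [Ha|Ha].
  - rewrite Hu, <- Series_zero by exact Ha; apply Series_ext; intro x; unfold t.
    destruct (Z.leb_spec (Z.of_nat x) a); [lia|simpl; ring].
  - assert (Hsum : sum_n t (Z.to_nat a) = u a :> R).
    { rewrite (sum_n_ext_loc _ (fun x => u (Z.of_nat x) - u (Z.of_nat x - 1)%Z)).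
      - rewrite sum_n_telescope, (Hu (-1)%Z), Z2Nat.id by lia; ring.
      - intros n Hn; unfold t; destruct (Z.leb_spec (Z.of_nat n) a); [simpl; ring|lia]. }
    rewrite <- Hsum; apply is_series_unique, is_series_finite.
    intros n Hn; unfold t; destruct (Z.leb_spec (Z.of_nat n) a); [lia|simpl; ring].
Qed.

Section Cdf.

Variable F : Z -> R.
Hypothesis F_cdf : is_cdf F.

Lemma cdf_neg s : (s < 0)%Z -> F s = 0.
Proof. apply F_cdf. Qed.

Lemma cdf_mono s t : (s <= t)%Z -> F s <= F t.
Proof. apply F_cdf. Qed.

Lemma cdf_ge0 s : 0 <= F s.
Proof.
  destruct (Z_lt_le_dec s 0); [rewrite cdf_neg by lia; lra|].
  rewrite <- (cdf_neg (-1)) by lia; apply cdf_mono; lia.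
Qed.

Lemma cdf_le1 s : F s <= 1.
Proof.
  destruct F_cdf as [_ [Fmono Flim]].
  destruct (Z_lt_le_dec s 0); [rewrite cdf_neg by lia; lra|].
  rewrite <- (Z2Nat.id s) by lia.
  apply (is_lim_seq_incr_compare (fun n => F (Z.of_nat n))); [exact Flim|].
  intro n; apply Fmono; lia.
Qed.

Lemma cdf_lt_inv s t : F s < F t -> (s < t)%Z.
Proof.
  intro H; destruct (Z_lt_le_dec s t) as [|Hts]; [assumption|].
  apply cdf_mono in Hts; lra.
Qed.

Lemma pmf_of_cdf_0 : pmf_of_cdf F 0 = F 0%Z.
Proof. unfold pmf_of_cdf; simpl; rewrite (cdf_neg (-1)) by lia; ring. Qed.

Lemma pmf_of_cdf_ge0 x : 0 <= pmf_of_cdf F x.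
Proof.
  unfold pmf_of_cdf; assert (F (Z.of_nat x - 1) <= F (Z.of_nat x)) by (apply cdf_mono; lia).
  lra.
Qed.

Lemma is_series_pmf_of_cdf : is_series (pmf_of_cdf F) 1.
Proof.
  destruct F_cdf as [_ [_ Flim]]; change (is_lim_seq (sum_n (pmf_of_cdf F)) 1).
  apply (is_lim_seq_ext _ _ _ (fun n => eq_sym (sum_n_telescope F n))).
  rewrite (cdf_neg (-1)) by lia.
  apply (is_lim_seq_ext (fun n => F (Z.of_nat n))); [intro; ring|exact Flim].
Qed.

Lemma Series_pmf_of_cdf_le a :
  Series (fun x => b2R (Z.leb (Z.of_nat x) a) * pmf_of_cdf F x) = F a.
Proof. apply Series_partial_telescope, cdf_neg. Qed.

(* [sum_x P(X = x) (F x + F (x - 1))] telescopes to [lim F^2 = 1]. *)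
Lemma Series_pmf_of_cdf_midpoint :
  Series (fun x => pmf_of_cdf F x * (F (Z.of_nat x) + F (Z.of_nat x - 1)%Z)) = 1.
Proof.
  destruct F_cdf as [_ [_ Flim]]; apply is_series_unique.
  change (is_lim_seq (sum_n (fun x => pmf_of_cdf F x * (F (Z.of_nat x) + F (Z.of_nat x - 1)%Z))) 1).
  apply is_lim_seq_ext with (fun n => F (Z.of_nat n) * F (Z.of_nat n)).
  - intro n; pose proof (sum_n_telescope (fun s => F s * F s) n) as T; cbv beta in T.
    rewrite (cdf_neg (-1)), Rmult_0_l, Rminus_0_r in T by lia; rewrite <- T.
    apply sum_n_ext; intro k; unfold pmf_of_cdf; cbn; ring.
  - replace (Finite 1) with (Rbar_mult 1 1) by (simpl; f_equal; ring).
    apply is_lim_seq_mult'; exact Flim.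
Qed.

End Cdf.

Section Joint.

Variables (F G : Z -> R) (h : nat -> nat -> R).
Hypotheses (F_cdf : is_cdf F) (G_cdf : is_cdf G) (h_joint : is_joint_pmf h F G).

Lemma Series_joint_row x : Series (h x) = pmf_of_cdf F x.
Proof. apply is_series_unique, h_joint. Qed.

Lemma Series_joint_col y : Series (fun x => h x y) = pmf_of_cdf G y.
Proof. apply is_series_unique, h_joint. Qed.

Lemma joint_is_pmf2 : is_pmf2 h.
Proof.
  destruct h_joint as [h_ge0 [Hr _]].
  assert (Hs : is_series (fun x => Series (h x)) 1).
  { apply (is_series_ext (pmf_of_cdf F)); [|apply is_series_pmf_of_cdf; exact F_cdf].
    intro x; symmetry; apply Series_joint_row. }
  repeat split; auto.
  - intro x; exists (pmf_of_cdf F x); apply Hr.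
  - exists 1; exact Hs.
  - apply is_series_unique, Hs.
Qed.

Lemma Series2_joint_fst (psi : nat -> R) :
  Series2 (fun x y => psi x * h x y) = Series (fun x => psi x * pmf_of_cdf F x).
Proof. apply Series_ext; intro x; rewrite Series_scal_l, Series_joint_row; reflexivity. Qed.

Lemma Series2_joint_snd (psi : nat -> R) B : (forall y, 0 <= psi y <= B) ->
  Series2 (fun x y => psi y * h x y) = Series (fun y => psi y * pmf_of_cdf G y).
Proof.
  intro Hpsi; destruct joint_is_pmf2 as [h_ge0 [Eh _]].
  assert (Hle : forall x y, 0 <= psi y * h x y <= B * h x y).
  { intros x y; specialize (Hpsi y); specialize (h_ge0 x y); split; nra. }
  destruct (Series2_swap (fun x y => psi y * h x y)) as [_ <-].
  - intros x y; apply Hle.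
  - apply (ex_series2_dominated _ _ Hle), ex_series2_scal, Eh.
  - apply Series_ext; intro y; rewrite Series_scal_l, Series_joint_col; reflexivity.
Qed.

Lemma mass_fst_le a : mass h (fun x y => Z.leb (Z.of_nat x) a) = F a.
Proof.
  unfold mass; rewrite (Series2_joint_fst (fun x => b2R (Z.leb (Z.of_nat x) a))).
  apply Series_pmf_of_cdf_le, F_cdf.
Qed.

Lemma mass_snd_le b : mass h (fun x y => Z.leb (Z.of_nat y) b) = G b.
Proof.
  unfold mass; rewrite (Series2_joint_snd (fun y => b2R (Z.leb (Z.of_nat y) b)) 1)
    by (intro; apply b2R_bounds).
  apply Series_pmf_of_cdf_le, G_cdf.
Qed.

Lemma mass_fst_eq n : mass h (fun x y => Nat.eqb x n) = pmf_of_cdf F n.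
Proof.
  unfold mass; rewrite (Series2_joint_fst (fun x => b2R (Nat.eqb x n))).
  rewrite <- (Series_indicator_nat (pmf_of_cdf F n) n); apply Series_ext; intro x.
  destruct (Nat.eqb_spec x n) as [->|]; simpl; ring.
Qed.

Lemma mass_snd_eq k : mass h (fun x y => Nat.eqb y k) = pmf_of_cdf G k.
Proof.
  unfold mass; rewrite (Series2_joint_snd (fun y => b2R (Nat.eqb y k)) 1)
    by (intro; apply b2R_bounds).
  rewrite <- (Series_indicator_nat (pmf_of_cdf G k) k); apply Series_ext; intro y.
  destruct (Nat.eqb_spec y k) as [->|]; simpl; ring.
Qed.

Lemma mass_fst_eq_snd_pos n :
  mass h (fun x y => Nat.eqb x n && (0 <? y)%nat) = pmf_of_cdf F n - h n 0%nat.
Proof.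
  pose proof (mass_orb_andb h joint_is_pmf2 (fun x y => Nat.eqb x n && Nat.eqb y 0)
    (fun x y => Nat.eqb x n && (0 <? y)%nat)) as E.
  rewrite (mass_ext h _ (fun x y => Nat.eqb x n)),
    (mass_ext h (fun x y => _ && _ && _) (fun _ _ => false)),
    mass_false, mass_point, mass_fst_eq in E
    by (intros x y; destruct (Nat.eqb x n), y; reflexivity).
  lra.
Qed.

Lemma mass_fst_pos_snd_eq k :
  mass h (fun x y => (0 <? x)%nat && Nat.eqb y k) = pmf_of_cdf G k - h 0%nat k.
Proof.
  pose proof (mass_orb_andb h joint_is_pmf2 (fun x y => Nat.eqb x 0 && Nat.eqb y k)
    (fun x y => (0 <? x)%nat && Nat.eqb y k)) as E.
  rewrite (mass_ext h _ (fun x y => Nat.eqb y k)),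
    (mass_ext h (fun x y => _ && _ && _) (fun _ _ => false)),
    mass_false, mass_point, mass_snd_eq in E
    by (intros x y; destruct (Nat.eqb y k), x; reflexivity).
  lra.
Qed.

Lemma cdf_of_pmf2_le_fst a b : cdf_of_pmf2 h a b <= F a.
Proof.
  rewrite <- mass_fst_le; apply (mass_le h joint_is_pmf2).
  intros x y; apply andb_prop.
Qed.

Lemma cdf_of_pmf2_le_snd a b : cdf_of_pmf2 h a b <= G b.
Proof.
  rewrite <- mass_snd_le; apply (mass_le h joint_is_pmf2).
  intros x y; apply andb_prop.
Qed.

Lemma cdf_of_pmf2_ge a b : F a + G b - 1 <= cdf_of_pmf2 h a b.
Proof.
  pose proof (mass_orb_andb h joint_is_pmf2 (fun x y => Z.leb (Z.of_nat x) a)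
    (fun x y => Z.leb (Z.of_nat y) b)) as E.
  rewrite mass_fst_le, mass_snd_le in E.
  pose proof (mass_le h joint_is_pmf2 (fun x y => Z.leb (Z.of_nat x) a || Z.leb (Z.of_nat y) b)
    (fun _ _ => true) (fun _ _ _ => eq_refl)) as L.
  rewrite mass_true in L by apply joint_is_pmf2; unfold cdf_of_pmf2; lra.
Qed.

End Joint.

Definition grade (a c : nat) : R :=
  b2R (Z.leb (Z.of_nat c) (Z.of_nat a)) + b2R (Z.leb (Z.of_nat c) (Z.of_nat a - 1)).

Definition kendall_kernel (a b c d : nat) : R := grade a c * grade b d.

Definition kernel_cdf (g : nat -> nat -> R) (a b : nat) : R :=
  cdf_of_pmf2 g (Z.of_nat a) (Z.of_nat b) + cdf_of_pmf2 g (Z.of_nat a - 1) (Z.of_nat b) +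
  cdf_of_pmf2 g (Z.of_nat a) (Z.of_nat b - 1) + cdf_of_pmf2 g (Z.of_nat a - 1) (Z.of_nat b - 1).

Ltac decide_nat_tests := repeat match goal with
  | |- context [Nat.ltb ?x ?y] => destruct (Nat.ltb_spec x y); try (exfalso; lia)
  | |- context [Nat.eqb ?x ?y] => destruct (Nat.eqb_spec x y); try (exfalso; lia)
  end.

Lemma grade_eq a c : grade a c = if Nat.ltb a c then 0 else if Nat.ltb c a then 2 else 1.
Proof.
  unfold grade; destruct (Z.leb_spec (Z.of_nat c) (Z.of_nat a));
    destruct (Z.leb_spec (Z.of_nat c) (Z.of_nat a - 1)); decide_nat_tests; simpl; try lia; ring.
Qed.

Lemma grade_bounds a c : 0 <= grade a c <= 2.
Proof. rewrite grade_eq; decide_nat_tests; lra. Qed.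

Lemma kendall_kernel_bounds a b c d : 0 <= kendall_kernel a b c d <= 4.
Proof.
  unfold kendall_kernel; pose proof (grade_bounds a c); pose proof (grade_bounds b d); split; nra.
Qed.

Lemma concordant_ltb a b c d :
  concordant a b c d = (Nat.ltb a c && Nat.ltb b d) || (Nat.ltb c a && Nat.ltb d b).
Proof.
  unfold concordant; decide_nat_tests;
    destruct (Z.ltb_spec 0 ((Z.of_nat a - Z.of_nat c) * (Z.of_nat b - Z.of_nat d))); 
    simpl; reflexivity || nia.
Qed.

Lemma discordant_ltb a b c d :
  discordant a b c d = (Nat.ltb a c && Nat.ltb d b) || (Nat.ltb c a && Nat.ltb b d).
Proof.
  unfold discordant; decide_nat_tests;
    destruct (Z.ltb_spec ((Z.of_nat a - Z.of_nat c) * (Z.of_nat b - Z.of_nat d)) 0);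
    simpl; reflexivity || nia.
Qed.

Ltac kernel_bounds := let a := fresh in let b := fresh in let c := fresh in let d := fresh in
  intros a b c d;
  pose proof (kendall_kernel_bounds a b c d); pose proof (kendall_kernel_bounds c d a b);
  pose proof (grade_bounds a c); pose proof (grade_bounds b d);
  pose proof (b2R_bounds (concordant a b c d)); pose proof (b2R_bounds (discordant a b c d));
  lra.

Lemma kendall_kernel_symmetrized a b c d :
  kendall_kernel a b c d + kendall_kernel c d a b + 2 * b2R (discordant a b c d) =
  2 + 2 * b2R (concordant a b c d).
Proof.
  unfold kendall_kernel; rewrite concordant_ltb, discordant_ltb, !grade_eq.
  decide_nat_tests; simpl; try lia; ring.
Qed.

Lemma kendall_kernel_reflected a b c d :
  kendall_kernel c d a b + 2 * grade a c + 2 * grade b d = 4 + kendall_kernel a b c d.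
Proof. unfold kendall_kernel; rewrite !grade_eq; decide_nat_tests; simpl; try lia; ring. Qed.

Lemma kendall_tau_A_kernel h : is_pmf2 h ->
  kendall_tau_A h = expect2 h h kendall_kernel - 1.
Proof.
  intro Hh; unfold kendall_tau_A; rewrite !prob2_expect2.
  assert (E : expect2 h h (fun a b c d =>
      (kendall_kernel a b c d + kendall_kernel c d a b) + 2 * b2R (discordant a b c d)) =
    expect2 h h (fun a b c d => 2 + 2 * b2R (concordant a b c d)))
    by (apply expect2_ext; intros; apply kendall_kernel_symmetrized).
  rewrite (expect2_plus _ _ Hh Hh _ _ 8 2), (expect2_plus _ _ Hh Hh _ _ 4 4),
    (expect2_plus _ _ Hh Hh _ _ 2 2), !expect2_scal, (expect2_const _ _ Hh Hh),
    <- (expect2_swap _ _ Hh Hh kendall_kernel 4) in E by kernel_bounds.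
  lra.
Qed.

Lemma Series_grade_pmf_of_cdf F a : is_cdf F ->
  Series (fun c => grade a c * pmf_of_cdf F c) = F (Z.of_nat a) + F (Z.of_nat a - 1)%Z.
Proof.
  intro HF; unfold grade.
  assert (Ex : forall s, ex_series (fun c => b2R (Z.leb (Z.of_nat c) s) * pmf_of_cdf F c)).
  { intro s; apply (ex_series_dominated _ (pmf_of_cdf F)).
    - intro c; pose proof (pmf_of_cdf_ge0 F HF c); pose proof (b2R_bounds (Z.leb (Z.of_nat c) s)).
      split; nra.
    - exists 1; apply is_series_pmf_of_cdf, HF. }
  rewrite <- !(Series_pmf_of_cdf_le F HF), <- Series_plus by apply Ex.
  apply Series_ext; intro c; ring.
Qed.

Section Same_marginals.

Variables (F G : Z -> R) (h g : nat -> nat -> R).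
Hypotheses (F_cdf : is_cdf F) (G_cdf : is_cdf G).
Hypotheses (h_joint : is_joint_pmf h F G) (g_joint : is_joint_pmf g F G).

Lemma expect2_grade_fst : expect2 h g (fun a b c d => grade a c) = 1.
Proof.
  rewrite expect2_inner.
  transitivity (Series2 (fun a b => (F (Z.of_nat a) + F (Z.of_nat a - 1)%Z) * h a b)).
  - apply Series2_ext; intros a b.
    rewrite (Series2_joint_fst F G g g_joint (grade a)), Series_grade_pmf_of_cdf by exact F_cdf.
    ring.
  - rewrite Series2_joint_fst with (1 := h_joint), <- (Series_pmf_of_cdf_midpoint F F_cdf).
    apply Series_ext; intro; ring.
Qed.

Lemma expect2_grade_snd : expect2 h g (fun a b c d => grade b d) = 1.
Proof.
  assert (G_bounds : forall y, 0 <= G (Z.of_nat y) + G (Z.of_nat y - 1)%Z <= 2).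
  { intro y; pose proof (cdf_ge0 G G_cdf (Z.of_nat y)); pose proof (cdf_le1 G G_cdf (Z.of_nat y));
    pose proof (cdf_ge0 G G_cdf (Z.of_nat y - 1)); pose proof (cdf_le1 G G_cdf (Z.of_nat y - 1)).
    lra. }
  rewrite expect2_inner.
  transitivity (Series2 (fun a b => (G (Z.of_nat b) + G (Z.of_nat b - 1)%Z) * h a b)).
  - apply Series2_ext; intros a b.
    rewrite (Series2_joint_snd F G g F_cdf g_joint (grade b) 2) by apply grade_bounds.
    rewrite Series_grade_pmf_of_cdf by exact G_cdf; ring.
  - rewrite (Series2_joint_snd F G h F_cdf h_joint _ 2 G_bounds).
    rewrite <- (Series_pmf_of_cdf_midpoint G G_cdf); apply Series_ext; intro; ring.
Qed.

(* From [kendall_kernel_reflected], since [E grade = 1] in each coordinate when the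
   marginals agree. *)
Lemma expect2_kendall_kernel_comm : expect2 h g kendall_kernel = expect2 g h kendall_kernel.
Proof.
  pose proof (joint_is_pmf2 F G h F_cdf h_joint) as Hh.
  pose proof (joint_is_pmf2 F G g F_cdf g_joint) as Hg.
  assert (E : expect2 h g (fun a b c d =>
      (kendall_kernel c d a b + 2 * grade a c) + 2 * grade b d) =
    expect2 h g (fun a b c d => 4 + kendall_kernel a b c d))
    by (apply expect2_ext; intros; apply kendall_kernel_reflected).
  rewrite (expect2_plus _ _ Hh Hg _ _ 8 4), (expect2_plus _ _ Hh Hg _ _ 4 4),
    (expect2_plus _ _ Hh Hg _ _ 4 4), !expect2_scal, (expect2_const _ _ Hh Hg),
    expect2_grade_fst, expect2_grade_snd,
    (expect2_swap _ _ Hh Hg (fun a b c d => kendall_kernel c d a b) 4) in E by kernel_bounds.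
  change (expect2 g h kendall_kernel + 2 * 1 + 2 * 1 = 4 + expect2 h g kendall_kernel) in E.
  lra.
Qed.

End Same_marginals.

Lemma Series2_kendall_kernel g a b : is_pmf2 g ->
  Series2 (fun c d => kendall_kernel a b c d * g c d) = kernel_cdf g a b.
Proof.
  intro Hg; unfold kernel_cdf, cdf_of_pmf2, mass.
  rewrite <- !Series2_plus by (repeat apply ex_series2_plus; apply ex_series2_mass, Hg).
  apply Series2_ext; intros c d; unfold kendall_kernel, grade; rewrite !b2R_andb; ring.
Qed.

Lemma kernel_cdf_le g1 g2 a b :
  (forall s t, cdf_of_pmf2 g1 s t <= cdf_of_pmf2 g2 s t) -> kernel_cdf g1 a b <= kernel_cdf g2 a b.
Proof.
  intro Hle; unfold kernel_cdf.
  pose proof (Hle (Z.of_nat a) (Z.of_nat b)); pose proof (Hle (Z.of_nat a - 1)%Z (Z.of_nat b)).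
  pose proof (Hle (Z.of_nat a) (Z.of_nat b - 1)%Z).
  pose proof (Hle (Z.of_nat a - 1)%Z (Z.of_nat b - 1)%Z).
  lra.
Qed.

Lemma cdf_of_pmf2_bounds g s t : is_pmf2 g -> 0 <= cdf_of_pmf2 g s t <= 1.
Proof. intro Hg; split; [apply mass_ge0|apply mass_le1]; exact Hg. Qed.

Lemma kernel_cdf_bounds g a b : is_pmf2 g -> 0 <= kernel_cdf g a b <= 4.
Proof.
  intro Hg; unfold kernel_cdf.
  pose proof (cdf_of_pmf2_bounds g (Z.of_nat a) (Z.of_nat b) Hg).
  pose proof (cdf_of_pmf2_bounds g (Z.of_nat a - 1) (Z.of_nat b) Hg).
  pose proof (cdf_of_pmf2_bounds g (Z.of_nat a) (Z.of_nat b - 1) Hg).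
  pose proof (cdf_of_pmf2_bounds g (Z.of_nat a - 1) (Z.of_nat b - 1) Hg).
  lra.
Qed.

Lemma expect2_kendall_kernel h g : is_pmf2 g ->
  expect2 h g kendall_kernel = Series2 (fun a b => kernel_cdf g a b * h a b).
Proof.
  intro Hg; rewrite expect2_inner; apply Series2_ext; intros a b.
  rewrite Series2_kendall_kernel by exact Hg; ring.
Qed.

Lemma expect2_kendall_kernel_le h g1 g2 : is_pmf2 h -> is_pmf2 g1 -> is_pmf2 g2 ->
  (forall s t, cdf_of_pmf2 g1 s t <= cdf_of_pmf2 g2 s t) ->
  expect2 h g1 kendall_kernel <= expect2 h g2 kendall_kernel.
Proof.
  intros [h_ge0 [Eh _]] Hg1 Hg2 Hle; rewrite !expect2_kendall_kernel by assumption.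
  assert (K : forall a b, 0 <= kernel_cdf g1 a b <= kernel_cdf g2 a b /\ kernel_cdf g2 a b <= 4).
  { intros a b; pose proof (kernel_cdf_bounds g1 a b Hg1).
    pose proof (kernel_cdf_bounds g2 a b Hg2).
    pose proof (kernel_cdf_le g1 g2 a b Hle); lra. }
  apply Series2_le.
  - intros a b; specialize (K a b); specialize (h_ge0 a b); split; nra.
  - apply (ex_series2_dominated _ (fun a b => 4 * h a b)); [|apply ex_series2_scal, Eh].
    intros a b; specialize (K a b); specialize (h_ge0 a b); split; nra.
Qed.

(* [tau h + 1 = E_hh <= E_hm = E_mh <= E_mm = tau m + 1], writing [E_hg] for
   [expect2 h g kendall_kernel]. *)
Lemma kendall_tau_A_le_of_cdf_le F G h m : is_cdf F -> is_cdf G ->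
  is_joint_pmf h F G -> is_joint_pmf m F G ->
  (forall s t, cdf_of_pmf2 h s t <= cdf_of_pmf2 m s t) -> kendall_tau_A h <= kendall_tau_A m.
Proof.
  intros HF HG Jh Jm Hle.
  pose proof (joint_is_pmf2 F G h HF Jh) as Hh; pose proof (joint_is_pmf2 F G m HF Jm) as Hm.
  rewrite !kendall_tau_A_kernel by assumption.
  pose proof (expect2_kendall_kernel_le h h m Hh Hh Hm Hle).
  pose proof (expect2_kendall_kernel_le m h m Hm Hh Hm Hle).
  rewrite (expect2_kendall_kernel_comm F G h m HF HG Jh Jm) in *; lra.
Qed.

Definition pmf_upper (F G : Z -> R) : nat -> nat -> R := pmf_of_cdf2 (frechet_upper F G).
Definition pmf_lower (F G : Z -> R) : nat -> nat -> R := pmf_of_cdf2 (frechet_lower F G).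

Lemma cdf_of_pmf2_pmf_of_cdf2 (C : Z -> Z -> R) a b :
  (forall s t, (s < 0)%Z \/ (t < 0)%Z -> C s t = 0) -> cdf_of_pmf2 (pmf_of_cdf2 C) a b = C a b.
Proof.
  intro HC; unfold cdf_of_pmf2, mass, Series2.
  rewrite <- (Series_partial_telescope (fun s => C s b) a) by (intros; apply HC; lia).
  apply Series_ext; intro x.
  rewrite <- (Series_partial_telescope (fun t => C (Z.of_nat x) t - C (Z.of_nat x - 1)%Z t) b)
    by (intros; rewrite !HC by lia; ring).
  rewrite <- Series_scal_l; apply Series_ext; intro y.
  rewrite b2R_andb; unfold pmf_of_cdf2; ring.
Qed.

Lemma is_series_pmf_of_cdf2_row (C : Z -> Z -> R) x (l : R) :
  (forall s, C s (-1)%Z = 0) ->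
  is_lim_seq (fun n => C (Z.of_nat x) (Z.of_nat n) - C (Z.of_nat x - 1)%Z (Z.of_nat n)) l ->
  is_series (fun y => pmf_of_cdf2 C x y) l.
Proof.
  intros HC Hl.
  assert (E : forall n, C (Z.of_nat x) (Z.of_nat n) - C (Z.of_nat x - 1)%Z (Z.of_nat n) =
    sum_n (fun y => pmf_of_cdf2 C x y) n).
  { intro n; pose proof (sum_n_telescope
      (fun t => C (Z.of_nat x) t - C (Z.of_nat x - 1)%Z t) n) as T; cbv beta in T.
    rewrite !HC, Rminus_0_r, Rminus_0_r in T; rewrite <- T.
    apply sum_n_ext; intro y; unfold pmf_of_cdf2; cbn; ring. }
  exact (is_lim_seq_ext _ _ _ E Hl).
Qed.

Lemma is_lim_seq_Rmin_l (c : R) (u : nat -> R) : is_lim_seq u 1 -> (forall n, u n <= 1) -> c <= 1 ->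
  is_lim_seq (fun n => Rmin c (u n)) c.
Proof.
  intros Hu Hb Hc; apply is_lim_seq_le_le with (fun n => c + (u n - 1)) (fun _ => c).
  - intro n; specialize (Hb n); unfold Rmin; destruct Rle_dec; lra.
  - replace (Finite c) with (Rbar_plus c (Rbar_minus 1 1)) by (simpl; f_equal; ring).
    apply is_lim_seq_plus', is_lim_seq_minus'; auto using is_lim_seq_const.
  - apply is_lim_seq_const.
Qed.

Lemma is_lim_seq_Rmax_lower (c : R) (u : nat -> R) :
  is_lim_seq u 1 -> (forall n, u n <= 1) -> 0 <= c ->
  is_lim_seq (fun n => Rmax (c + u n - 1) 0) c.
Proof.
  intros Hu Hb Hc; apply is_lim_seq_le_le with (fun n => c + (u n - 1)) (fun _ => c).
  - intro n; specialize (Hb n); unfold Rmax; destruct Rle_dec; lra.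
  - replace (Finite c) with (Rbar_plus c (Rbar_minus 1 1)) by (simpl; f_equal; ring).
    apply is_lim_seq_plus', is_lim_seq_minus'; auto using is_lim_seq_const.
  - apply is_lim_seq_const.
Qed.

Lemma pmf_upper_transpose F G x y : pmf_upper F G x y = pmf_upper G F y x.
Proof. unfold pmf_upper, pmf_of_cdf2, frechet_upper; rewrite !(Rmin_comm (G _)); ring. Qed.

Lemma pmf_lower_transpose F G x y : pmf_lower F G x y = pmf_lower G F y x.
Proof. unfold pmf_lower, pmf_of_cdf2, frechet_lower; rewrite !(Rplus_comm (G _) (F _)); ring. Qed.

Section Frechet.

Variables F G : Z -> R.
Hypotheses (F_cdf : is_cdf F) (G_cdf : is_cdf G).

Lemma frechet_upper_neg s t : (s < 0)%Z \/ (t < 0)%Z -> frechet_upper F G s t = 0.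
Proof.
  pose proof (cdf_ge0 F F_cdf s); pose proof (cdf_ge0 G G_cdf t).
  unfold frechet_upper, Rmin; intros [Hs|Ht];
    rewrite ?(cdf_neg F F_cdf s Hs), ?(cdf_neg G G_cdf t Ht);
    destruct Rle_dec; lra.
Qed.

Lemma frechet_lower_neg s t : (s < 0)%Z \/ (t < 0)%Z -> frechet_lower F G s t = 0.
Proof.
  pose proof (cdf_le1 F F_cdf s); pose proof (cdf_le1 G G_cdf t).
  unfold frechet_lower, Rmax; intros [Hs|Ht];
    rewrite ?(cdf_neg F F_cdf s Hs), ?(cdf_neg G G_cdf t Ht);
    destruct Rle_dec; lra.
Qed.

Lemma cdf_of_pmf2_upper a b : cdf_of_pmf2 (pmf_upper F G) a b = Rmin (F a) (G b).
Proof. apply cdf_of_pmf2_pmf_of_cdf2, frechet_upper_neg. Qed.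

Lemma cdf_of_pmf2_lower a b : cdf_of_pmf2 (pmf_lower F G) a b = Rmax (F a + G b - 1) 0.
Proof. apply cdf_of_pmf2_pmf_of_cdf2, frechet_lower_neg. Qed.

Let F_le1 := cdf_le1 F F_cdf.
Let G_le1 := cdf_le1 G G_cdf.
Let G_lim : is_lim_seq (fun n => G (Z.of_nat n)) 1 := proj2 (proj2 G_cdf).

Lemma is_series_pmf_upper_row x : is_series (fun y => pmf_upper F G x y) (pmf_of_cdf F x).
Proof.
  apply is_series_pmf_of_cdf2_row; [intro; apply frechet_upper_neg; lia|].
  apply is_lim_seq_minus'; apply is_lim_seq_Rmin_l; auto using G_lim.
Qed.

Lemma is_series_pmf_lower_row x : is_series (fun y => pmf_lower F G x y) (pmf_of_cdf F x).
Proof.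
  apply is_series_pmf_of_cdf2_row; [intro; apply frechet_lower_neg; lia|].
  apply is_lim_seq_minus'; apply is_lim_seq_Rmax_lower; auto using G_lim; apply cdf_ge0, F_cdf.
Qed.

Lemma pmf_upper_axis x : pmf_upper F G x 0 =
  Rmin (F (Z.of_nat x)) (G 0%Z) - Rmin (F (Z.of_nat x - 1)%Z) (G 0%Z).
Proof.
  unfold pmf_upper, pmf_of_cdf2, frechet_upper; simpl; rewrite (cdf_neg G G_cdf (-1)) by lia.
  pose proof (cdf_ge0 F F_cdf (Z.of_nat x)); pose proof (cdf_ge0 F F_cdf (Z.of_nat x - 1)).
  rewrite !(Rmin_right _ 0) by lra; ring.
Qed.

Lemma pmf_lower_axis x : pmf_lower F G x 0 =
  Rmax (F (Z.of_nat x) + G 0%Z - 1) 0 - Rmax (F (Z.of_nat x - 1)%Z + G 0%Z - 1) 0.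
Proof.
  unfold pmf_lower, pmf_of_cdf2, frechet_lower; simpl; rewrite (cdf_neg G G_cdf (-1)) by lia.
  pose proof (F_le1 (Z.of_nat x)); pose proof (F_le1 (Z.of_nat x - 1)).
  rewrite (Rmax_right (F (Z.of_nat x) + 0 - 1) 0), (Rmax_right (F (Z.of_nat x - 1) + 0 - 1) 0)
    by lra; ring.
Qed.

Lemma pmf_lower_origin : pmf_lower F G 0 0 = Rmax (F 0%Z + G 0%Z - 1) 0.
Proof.
  rewrite pmf_lower_axis; simpl; rewrite (cdf_neg F F_cdf (-1)) by lia.
  pose proof (G_le1 0); rewrite (Rmax_right (0 + G 0%Z - 1) 0) by lra; ring.
Qed.

Lemma pmf_upper_support a b : pmf_upper F G a b <> 0 ->
  F (Z.of_nat a - 1)%Z < G (Z.of_nat b) /\ G (Z.of_nat b - 1)%Z < F (Z.of_nat a).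
Proof.
  unfold pmf_upper, pmf_of_cdf2, frechet_upper; intro H.
  assert (F (Z.of_nat a - 1)%Z <= F (Z.of_nat a)) by (apply cdf_mono; auto; lia).
  assert (G (Z.of_nat b - 1)%Z <= G (Z.of_nat b)) by (apply cdf_mono; auto; lia).
  split; apply Rnot_le_lt; intro C; apply H; unfold Rmin; repeat destruct Rle_dec; lra.
Qed.

Lemma pmf_lower_support a b : pmf_lower F G a b <> 0 ->
  F (Z.of_nat a - 1)%Z + G (Z.of_nat b - 1)%Z < 1 /\ 1 < F (Z.of_nat a) + G (Z.of_nat b).
Proof.
  unfold pmf_lower, pmf_of_cdf2, frechet_lower; intro H.
  assert (F (Z.of_nat a - 1)%Z <= F (Z.of_nat a)) by (apply cdf_mono; auto; lia).
  assert (G (Z.of_nat b - 1)%Z <= G (Z.of_nat b)) by (apply cdf_mono; auto; lia).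
  split; apply Rnot_le_lt; intro C; apply H; unfold Rmax; repeat destruct Rle_dec; lra.
Qed.

End Frechet.

Lemma is_joint_pmf_upper F G : is_cdf F -> is_cdf G -> is_joint_pmf (pmf_upper F G) F G.
Proof.
  intros HF HG; repeat split.
  - intros x y; unfold pmf_upper, pmf_of_cdf2, frechet_upper.
    assert (F (Z.of_nat x - 1)%Z <= F (Z.of_nat x)) by (apply cdf_mono; auto; lia).
    assert (G (Z.of_nat y - 1)%Z <= G (Z.of_nat y)) by (apply cdf_mono; auto; lia).
    unfold Rmin; repeat destruct Rle_dec; lra.
  - apply is_series_pmf_upper_row; auto.
  - intro y; apply (is_series_ext (fun x => pmf_upper G F y x)).
    + intro; symmetry; apply pmf_upper_transpose.
    + apply is_series_pmf_upper_row; auto.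
Qed.

Lemma is_joint_pmf_lower F G : is_cdf F -> is_cdf G -> is_joint_pmf (pmf_lower F G) F G.
Proof.
  intros HF HG; repeat split.
  - intros x y; unfold pmf_lower, pmf_of_cdf2, frechet_lower.
    assert (F (Z.of_nat x - 1)%Z <= F (Z.of_nat x)) by (apply cdf_mono; auto; lia).
    assert (G (Z.of_nat y - 1)%Z <= G (Z.of_nat y)) by (apply cdf_mono; auto; lia).
    unfold Rmax; repeat destruct Rle_dec; lra.
  - apply is_series_pmf_lower_row; auto.
  - intro y; apply (is_series_ext (fun x => pmf_lower G F y x)).
    + intro; symmetry; apply pmf_lower_transpose.
    + apply is_series_pmf_lower_row; auto.
Qed.

Lemma kendall_tau_A_le_upper F G h : is_cdf F -> is_cdf G -> is_joint_pmf h F G ->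
  kendall_tau_A h <= kendall_tau_A (pmf_upper F G).
Proof.
  intros HF HG Jh; apply (kendall_tau_A_le_of_cdf_le F G); auto using is_joint_pmf_upper.
  intros s t; rewrite cdf_of_pmf2_upper by auto; apply Rmin_glb.
  - apply (cdf_of_pmf2_le_fst F G); auto.
  - apply (cdf_of_pmf2_le_snd F G); auto.
Qed.

Lemma kendall_tau_A_ge_lower F G h : is_cdf F -> is_cdf G -> is_joint_pmf h F G ->
  kendall_tau_A (pmf_lower F G) <= kendall_tau_A h.
Proof.
  intros HF HG Jh; apply (kendall_tau_A_le_of_cdf_le F G); auto using is_joint_pmf_lower.
  intros s t; rewrite cdf_of_pmf2_lower by auto; apply Rmax_lub.
  - apply (cdf_of_pmf2_ge F G); auto.
  - apply mass_ge0, (joint_is_pmf2 F G); auto.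
Qed.

Definition pos2 (x y : nat) : bool := (0 <? x)%nat && (0 <? y)%nat.

Definition boundary_tie (a b c d : nat) : bool := negb (both_pos a b c d) && tie a b c d.

Definition product_events := list ((nat -> nat -> bool) * (nat -> nat -> bool)).

Definition product_count (L : product_events) (a b c d : nat) : nat :=
  fold_right (fun p s => Nat.b2n (fst p a b && snd p c d) + s)%nat 0%nat L.

Definition mass_products (h : nat -> nat -> R) (L : product_events) : R :=
  fold_right (fun p s => mass h (fst p) * mass h (snd p) + s) 0 L.

Lemma b2R_b2n b : b2R b = INR (Nat.b2n b).
Proof. destruct b; reflexivity. Qed.

Lemma product_count_le L a b c d : (product_count L a b c d <= length L)%nat.
Proof.
  induction L as [|p L IH]; simpl; [lia|].
  destruct (fst p a b && snd p c d); simpl; lia.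
Qed.

(* On the support, [E] is the disjoint union of the rectangles [A x B], [(A, B)] in [L]. *)
Lemma prob2_products h (L : product_events) E : is_pmf2 h ->
  (forall a b c d, h a b <> 0 -> h c d <> 0 -> Nat.b2n (E a b c d) = product_count L a b c d) ->
  prob2 h E = mass_products h L.
Proof.
  intros Hh HE; rewrite prob2_expect2.
  rewrite (expect2_ext_supp _ _ _ (fun a b c d => INR (product_count L a b c d)))
    by (intros; rewrite b2R_b2n, HE; auto); clear E HE.
  unfold mass_products; induction L as [|p L IH]; cbn [fold_right].
  - exact (expect2_const h h Hh Hh 0).
  - rewrite (expect2_ext _ _ _ (fun a b c d => b2R (fst p a b) * b2R (snd p c d) +
      INR (product_count L a b c d))) by (intros; unfold product_count; cbn [fold_right];
      rewrite plus_INR, <- b2R_b2n, b2R_andb; reflexivity).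
    rewrite (expect2_plus _ _ Hh Hh _ _ 1 (INR (length L))), expect2_b2R_mul, IH; [reflexivity| |].
    + intros; pose proof (b2R_bounds (fst p a b)); pose proof (b2R_bounds (snd p c d)); split; nra.
    + intros; split; [apply pos_INR|apply le_INR, product_count_le].
Qed.

Ltac decide_bool_tests :=
  unfold product_count, boundary_tie, both_pos, pos2, tie; cbn [fold_right fst snd];
  decide_nat_tests; simpl.

Lemma prob2_true h : is_pmf2 h -> prob2 h (fun _ _ _ _ => true) = 1.
Proof. intro Hh; rewrite prob2_expect2; exact (expect2_const h h Hh Hh 1). Qed.

Lemma prob2_both_pos h : is_pmf2 h -> prob2 h both_pos = mass h pos2 ^ 2.
Proof.
  intro Hh; rewrite (prob2_products h ((pos2, pos2) :: nil))
    by (auto; intros; decide_bool_tests; reflexivity).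
  simpl; ring.
Qed.

(* If [mass h pos2 = 0] both sides vanish, whatever the value of [x / 0]. *)
Lemma prob2_both_pos_tie h : is_pmf2 h ->
  prob2 h (fun a b c d => both_pos a b c d && tie a b c d) = mass h pos2 ^ 2 * cond_tie_prob h.
Proof.
  intro Hh; unfold cond_tie_prob; rewrite prob2_both_pos by exact Hh.
  destruct (Req_dec (mass h pos2 ^ 2) 0) as [E|E]; [|field; contradict E; rewrite E; ring].
  rewrite E, Rmult_0_l; apply Rle_antisym.
  - rewrite <- E, <- prob2_both_pos by exact Hh.
    apply prob2_le; [exact Hh|]; intros a b c d; apply andb_prop.
  - apply prob2_ge0, Hh.
Qed.

Lemma prob2_partition h : is_pmf2 h ->
  prob2 h concordant + prob2 h discordant + mass h pos2 ^ 2 * cond_tie_prob h +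
  prob2 h boundary_tie = 1.
Proof.
  intro Hh; rewrite <- prob2_both_pos_tie, <- !prob2_orb, <- (prob2_true h Hh) by (exact Hh ||
    (intros; rewrite ?concordant_ltb, ?discordant_ltb; decide_bool_tests; reflexivity || lia)).
  apply prob2_ext; intros; rewrite concordant_ltb, discordant_ltb.
  decide_bool_tests; reflexivity || lia.
Qed.

Definition transpose (h : nat -> nat -> R) (x y : nat) : R := h y x.

Lemma prob2_transpose h E : is_pmf2 h ->
  prob2 (transpose h) E = prob2 h (fun a b c d => E b a d c).
Proof.
  intro Hh; rewrite !prob2_expect2; unfold expect2.
  assert (E_bounds : forall a b c d, 0 <= b2R (E b a d c) <= 1) by (intros; apply b2R_bounds).
  rewrite <- (Series4_swap_coordinates (fun a b c d => b2R (E b a d c) * h a b * h c d)).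
  - reflexivity.
  - exact (expect2_integrand_ge0 h h Hh Hh _ 1 E_bounds).
  - exact (ex_series4_expect2 h h Hh Hh _ 1 E_bounds).
Qed.

Lemma kendall_tau_A_transpose h : is_pmf2 h -> kendall_tau_A (transpose h) = kendall_tau_A h.
Proof.
  intro Hh; unfold kendall_tau_A; rewrite !prob2_transpose by exact Hh.
  f_equal; apply prob2_ext; intros; unfold concordant, discordant; rewrite Z.mul_comm; reflexivity.
Qed.

Lemma cond_tie_prob_transpose h : is_pmf2 h -> cond_tie_prob (transpose h) = cond_tie_prob h.
Proof.
  intro Hh; unfold cond_tie_prob; rewrite !prob2_transpose by exact Hh.
  f_equal; apply prob2_ext; intros; unfold both_pos, tie;
    destruct (0 <? a)%nat, (0 <? b)%nat, (0 <? c)%nat, (0 <? d)%nat, (a =? c)%nat, (b =? d)%nat;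
    reflexivity.
Qed.

Lemma prob2_discordant_upper F G : is_cdf F -> is_cdf G -> prob2 (pmf_upper F G) discordant = 0.
Proof.
  intros HF HG.
  assert (Key : forall a b c d, pmf_upper F G a b <> 0 -> pmf_upper F G c d <> 0 ->
    (a < c)%nat -> (d < b)%nat -> False).
  { intros a b c d Hab Hcd Hac Hdb.
    destruct (pmf_upper_support F G HF HG a b Hab), (pmf_upper_support F G HF HG c d Hcd).
    assert (F (Z.of_nat a) <= F (Z.of_nat c - 1)%Z) by (apply cdf_mono; auto; lia).
    assert (G (Z.of_nat d) <= G (Z.of_nat b - 1)%Z) by (apply cdf_mono; auto; lia).
    lra. }
  rewrite <- (prob2_false (pmf_upper F G)); apply prob2_ext_supp.
  intros a b c d Hab Hcd; rewrite discordant_ltb; decide_nat_tests; simpl; auto; exfalso;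
    first [lia | now apply (Key a b c d) | now apply (Key c d a b)].
Qed.

Lemma prob2_concordant_lower F G : is_cdf F -> is_cdf G -> prob2 (pmf_lower F G) concordant = 0.
Proof.
  intros HF HG.
  assert (Key : forall a b c d, pmf_lower F G a b <> 0 -> pmf_lower F G c d <> 0 ->
    (a < c)%nat -> (b < d)%nat -> False).
  { intros a b c d Hab Hcd Hac Hbd.
    destruct (pmf_lower_support F G HF HG a b Hab), (pmf_lower_support F G HF HG c d Hcd).
    assert (F (Z.of_nat a) <= F (Z.of_nat c - 1)%Z) by (apply cdf_mono; auto; lia).
    assert (G (Z.of_nat b) <= G (Z.of_nat d - 1)%Z) by (apply cdf_mono; auto; lia).
    lra. }
  rewrite <- (prob2_false (pmf_lower F G)); apply prob2_ext_supp.
  intros a b c d Hab Hcd; rewrite concordant_ltb; decide_nat_tests; simpl; auto; exfalso;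
    first [lia | now apply (Key a b c d) | now apply (Key c d a b)].
Qed.

Section Upper_value.

Variables (F G : Z -> R) (n : nat).
Hypotheses (F_cdf : is_cdf F) (G_cdf : is_cdf G).
Hypotheses (p1_le_p2 : F 0%Z <= G 0%Z) (Fn_gt : G 0%Z < F (Z.of_nat n))
  (Fn1_le : F (Z.of_nat n - 1)%Z <= G 0%Z).

Let m := pmf_upper F G.
Let m_joint : is_joint_pmf m F G := is_joint_pmf_upper F G F_cdf G_cdf.
Let m_pmf : is_pmf2 m := joint_is_pmf2 F G m F_cdf m_joint.

Lemma pmf_upper_corner : m n 0 = G 0%Z - F (Z.of_nat n - 1)%Z.
Proof. unfold m; rewrite pmf_upper_axis, Rmin_right, Rmin_left by (auto || lra); reflexivity. Qed.

Lemma upper_threshold_pos : (0 < n)%nat.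
Proof. assert (0 < Z.of_nat n)%Z by (apply (cdf_lt_inv F F_cdf); lra); lia. Qed.

Lemma pmf_upper_staircase a b : m a b <> 0 -> (b = 0 /\ a <= n)%nat \/ (0 < b /\ n <= a)%nat.
Proof.
  intro Hab; destruct (pmf_upper_support F G F_cdf G_cdf a b Hab) as [S1 S2].
  destruct b as [|b]; [left|right]; split; try lia.
  - change (Z.of_nat 0) with 0%Z in S1.
    assert (Z.of_nat a - 1 < Z.of_nat n)%Z by (apply (cdf_lt_inv F F_cdf); lra); lia.
  - assert (G 0%Z <= G (Z.of_nat (S b) - 1)%Z) by (apply cdf_mono; auto; lia).
    assert (Z.of_nat n - 1 < Z.of_nat a)%Z by (apply (cdf_lt_inv F F_cdf); lra); lia.
Qed.

Lemma prob2_boundary_tie_upper :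
  prob2 m boundary_tie = G 0%Z ^ 2 + 2 * (G 0%Z - F (Z.of_nat n - 1)%Z) * (F (Z.of_nat n) - G 0%Z).
Proof.
  pose proof upper_threshold_pos.
  set (Y0 := fun x y : nat => Nat.eqb y 0).
  set (A := fun x y : nat => Nat.eqb x n && Nat.eqb y 0).
  set (B := fun x y : nat => Nat.eqb x n && (0 <? y)%nat).
  rewrite (prob2_products m ((Y0, Y0) :: (A, B) :: (B, A) :: nil)); [|exact m_pmf|].
  - unfold mass_products, Y0, A, B; simpl.
    rewrite (mass_snd_eq F G m F_cdf m_joint), pmf_of_cdf_0 by exact G_cdf.
    rewrite mass_point, (mass_fst_eq_snd_pos F G m F_cdf m_joint), pmf_upper_corner.
    unfold pmf_of_cdf; ring.
  - intros a b c d Hab Hcd; unfold Y0, A, B.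
    destruct (pmf_upper_staircase a b Hab) as [[-> ?]|[? ?]],
      (pmf_upper_staircase c d Hcd) as [[-> ?]|[? ?]]; decide_bool_tests; reflexivity.
Qed.

Lemma mass_pos2_upper : mass m pos2 = 1 - G 0%Z.
Proof.
  rewrite (mass_ext_supp m pos2 (fun x y => negb (Nat.eqb y 0))).
  - rewrite (mass_negb m m_pmf), (mass_snd_eq F G m F_cdf m_joint), pmf_of_cdf_0 by exact G_cdf.
    reflexivity.
  - intros x y Hxy; pose proof upper_threshold_pos.
    destruct (pmf_upper_staircase x y Hxy) as [[-> ?]|[? ?]];
      unfold pos2; decide_nat_tests; reflexivity.
Qed.

Lemma kendall_tau_A_upper_value : kendall_tau_A m =
  (1 - G 0%Z ^ 2) - (1 - G 0%Z) ^ 2 * cond_tie_prob m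
  - 2 * (G 0%Z - F (Z.of_nat n - 1)%Z) * (F (Z.of_nat n) - G 0%Z).
Proof.
  pose proof (prob2_partition m m_pmf) as P.
  assert (D : prob2 m discordant = 0) by exact (prob2_discordant_upper F G F_cdf G_cdf).
  rewrite D, prob2_boundary_tie_upper, mass_pos2_upper in P.
  unfold kendall_tau_A; rewrite D; lra.
Qed.

End Upper_value.

Section Lower_value_heavy_zeros.

Variables F G : Z -> R.
Hypotheses (F_cdf : is_cdf F) (G_cdf : is_cdf G) (heavy_zeros : 1 < F 0%Z + G 0%Z).

Let w := pmf_lower F G.
Let w_joint : is_joint_pmf w F G := is_joint_pmf_lower F G F_cdf G_cdf.
Let w_pmf : is_pmf2 w := joint_is_pmf2 F G w F_cdf w_joint.

Lemma pmf_lower_on_axes a b : w a b <> 0 -> (a = 0 \/ b = 0)%nat.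
Proof.
  intro Hab; destruct (pmf_lower_support F G F_cdf G_cdf a b Hab) as [S1 _].
  destruct a as [|a]; [now left|]; destruct b as [|b]; [now right|]; exfalso.
  assert (F 0%Z <= F (Z.of_nat (S a) - 1)%Z) by (apply cdf_mono; auto; lia).
  assert (G 0%Z <= G (Z.of_nat (S b) - 1)%Z) by (apply cdf_mono; auto; lia).
  lra.
Qed.

Lemma kendall_tau_A_lower_value_heavy : kendall_tau_A w = - 2 * (1 - F 0%Z) * (1 - G 0%Z).
Proof.
  set (A := fun x y : nat => Nat.eqb x 0 && (0 <? y)%nat).
  set (B := fun x y : nat => (0 <? x)%nat && Nat.eqb y 0).
  assert (w00 : w 0 0 = F 0%Z + G 0%Z - 1)
    by (unfold w; rewrite pmf_lower_origin, Rmax_left; auto; lra).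
  assert (C : prob2 w concordant = 0) by exact (prob2_concordant_lower F G F_cdf G_cdf).
  unfold kendall_tau_A; rewrite C, (prob2_products w ((A, B) :: (B, A) :: nil)); [|exact w_pmf|].
  - unfold mass_products, A, B; simpl.
    rewrite (mass_fst_eq_snd_pos F G w F_cdf w_joint), (mass_fst_pos_snd_eq F G w F_cdf w_joint),
      !pmf_of_cdf_0, w00 by auto; ring.
  - intros a b c d Hab Hcd.
    pose proof (pmf_lower_on_axes a b Hab); pose proof (pmf_lower_on_axes c d Hcd).
    unfold A, B; rewrite discordant_ltb; decide_bool_tests; reflexivity.
Qed.

End Lower_value_heavy_zeros.

Section Lower_value_light_zeros.

Variables (F G : Z -> R) (n k : nat).
Hypotheses (F_cdf : is_cdf F) (G_cdf : is_cdf G) (light_zeros : F 0%Z + G 0%Z < 1).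
Hypotheses (Fn_gt : 1 < F (Z.of_nat n) + G 0%Z) (Fn1_le : F (Z.of_nat n - 1)%Z + G 0%Z <= 1).
Hypotheses (Gk_gt : 1 < G (Z.of_nat k) + F 0%Z) (Gk1_le : G (Z.of_nat k - 1)%Z + F 0%Z <= 1).

Let w := pmf_lower F G.
Let w_joint : is_joint_pmf w F G := is_joint_pmf_lower F G F_cdf G_cdf.
Let w_pmf : is_pmf2 w := joint_is_pmf2 F G w F_cdf w_joint.

Lemma pmf_lower_staircase a b : w a b <> 0 ->
  (b = 0 /\ n <= a)%nat \/ (a = 0 /\ k <= b)%nat \/ (0 < a <= n /\ 0 < b <= k)%nat.
Proof.
  intro Hab; destruct (pmf_lower_support F G F_cdf G_cdf a b Hab) as [S1 S2].
  destruct b as [|b]; [|destruct a as [|a]].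
  - left; split; [reflexivity|]; change (Z.of_nat 0) with 0%Z in S2.
    assert (Z.of_nat n - 1 < Z.of_nat a)%Z by (apply (cdf_lt_inv F F_cdf); lra); lia.
  - right; left; split; [reflexivity|]; change (Z.of_nat 0) with 0%Z in S2.
    assert (Z.of_nat k - 1 < Z.of_nat (S b))%Z by (apply (cdf_lt_inv G G_cdf); lra); lia.
  - right; right.
    assert (G 0%Z <= G (Z.of_nat (S b) - 1)%Z) by (apply cdf_mono; auto; lia).
    assert (F 0%Z <= F (Z.of_nat (S a) - 1)%Z) by (apply cdf_mono; auto; lia).
    assert (Z.of_nat (S a) - 1 < Z.of_nat n)%Z by (apply (cdf_lt_inv F F_cdf); lra).
    assert (Z.of_nat (S b) - 1 < Z.of_nat k)%Z by (apply (cdf_lt_inv G G_cdf); lra).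
    lia.
Qed.

Lemma pmf_lower_corners :
  w n 0 = F (Z.of_nat n) + G 0%Z - 1 /\ w 0 k = G (Z.of_nat k) + F 0%Z - 1.
Proof.
  unfold w; split.
  - rewrite pmf_lower_axis, Rmax_left, Rmax_right by (auto || lra); ring.
  - rewrite pmf_lower_transpose, pmf_lower_axis, Rmax_left, Rmax_right by (auto || lra); ring.
Qed.

Lemma prob2_boundary_tie_lower : prob2 w boundary_tie =
  G 0%Z ^ 2 + F 0%Z ^ 2 +
  2 * ((F (Z.of_nat n) + G 0%Z - 1) * (1 - G 0%Z - F (Z.of_nat n - 1)%Z) +
       (G (Z.of_nat k) + F 0%Z - 1) * (1 - F 0%Z - G (Z.of_nat k - 1)%Z)).
Proof.
  assert (n_pos : (0 < n)%nat).
  { assert (0 < Z.of_nat n)%Z by (apply (cdf_lt_inv F F_cdf); lra); lia. }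
  assert (k_pos : (0 < k)%nat).
  { assert (0 < Z.of_nat k)%Z by (apply (cdf_lt_inv G G_cdf); lra); lia. }
  set (Y0 := fun x y : nat => Nat.eqb y 0); set (X0 := fun x y : nat => Nat.eqb x 0).
  set (A := fun x y : nat => Nat.eqb x n && Nat.eqb y 0).
  set (B := fun x y : nat => Nat.eqb x n && (0 <? y)%nat).
  set (C := fun x y : nat => Nat.eqb x 0 && Nat.eqb y k).
  set (D := fun x y : nat => (0 <? x)%nat && Nat.eqb y k).
  rewrite (prob2_products w ((Y0, Y0) :: (X0, X0) :: (A, B) :: (B, A) :: (C, D) :: (D, C) :: nil));
    [|exact w_pmf|].
  - destruct pmf_lower_corners as [wn0 w0k].
    unfold mass_products, Y0, X0, A, B, C, D; simpl.
    rewrite (mass_snd_eq F G w F_cdf w_joint), (mass_fst_eq F G w w_joint), !pmf_of_cdf_0,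
      !mass_point, (mass_fst_eq_snd_pos F G w F_cdf w_joint),
      (mass_fst_pos_snd_eq F G w F_cdf w_joint), wn0, w0k by auto.
    unfold pmf_of_cdf; ring.
  - intros a b c d Hab Hcd.
    unfold Y0, X0, A, B, C, D.
    destruct (pmf_lower_staircase a b Hab) as [[-> ?]|[[-> ?]|[? ?]]],
      (pmf_lower_staircase c d Hcd) as [[-> ?]|[[-> ?]|[? ?]]]; decide_bool_tests; reflexivity.
Qed.

Lemma mass_pos2_lower : mass w pos2 = 1 - F 0%Z - G 0%Z.
Proof.
  pose proof (mass_orb_andb w w_pmf (fun x y => Nat.eqb x 0) (fun x y => Nat.eqb y 0)) as E.
  assert (w00 : w 0 0 = 0) by (unfold w; rewrite pmf_lower_origin, Rmax_right; auto; lra).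
  cbv beta in E; rewrite mass_point, w00, (mass_fst_eq F G w w_joint),
    (mass_snd_eq F G w F_cdf w_joint), !pmf_of_cdf_0 in E by auto.
  rewrite (mass_ext w pos2 (fun x y => negb (Nat.eqb x 0 || Nat.eqb y 0))), mass_negb by
    (auto || (intros x y; unfold pos2; decide_nat_tests; reflexivity)).
  lra.
Qed.

Lemma kendall_tau_A_lower_value_light : kendall_tau_A w =
  F 0%Z ^ 2 + G 0%Z ^ 2 - 1 + (1 - F 0%Z - G 0%Z) ^ 2 * cond_tie_prob w +
  2 * ((F (Z.of_nat n) + G 0%Z - 1) * (1 - G 0%Z - F (Z.of_nat n - 1)%Z) +
       (G (Z.of_nat k) + F 0%Z - 1) * (1 - F 0%Z - G (Z.of_nat k - 1)%Z)).
Proof.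
  pose proof (prob2_partition w w_pmf) as P.
  assert (C : prob2 w concordant = 0) by exact (prob2_concordant_lower F G F_cdf G_cdf).
  rewrite C, prob2_boundary_tie_lower, mass_pos2_lower in P.
  unfold kendall_tau_A; rewrite C; lra.
Qed.

End Lower_value_light_zeros.

Lemma pmf_upper_eq_transpose F G : pmf_upper F G = transpose (pmf_upper G F).
Proof.
  apply functional_extensionality; intro x; apply functional_extensionality; intro y.
  apply pmf_upper_transpose.
Qed.

Lemma kendall_tau_A_upper_value_transposed F G n : is_cdf F -> is_cdf G ->
  G 0%Z <= F 0%Z -> F 0%Z < G (Z.of_nat n) -> G (Z.of_nat n - 1)%Z <= F 0%Z ->
  kendall_tau_A (pmf_upper F G) =
  (1 - F 0%Z ^ 2) - (1 - F 0%Z) ^ 2 * cond_tie_prob (pmf_upper F G)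
  - 2 * (F 0%Z - G (Z.of_nat n - 1)%Z) * (G (Z.of_nat n) - F 0%Z).
Proof.
  intros HF HG H0 Hn Hn1.
  pose proof (joint_is_pmf2 G F _ HG (is_joint_pmf_upper G F HG HF)) as Hm.
  rewrite pmf_upper_eq_transpose, kendall_tau_A_transpose, cond_tie_prob_transpose by exact Hm.
  apply kendall_tau_A_upper_value; assumption.
Qed.

Lemma tau_A_max_upper F G v : is_cdf F -> is_cdf G ->
  kendall_tau_A (pmf_upper F G) = v -> tau_A_max F G v.
Proof.
  intros HF HG <-; split.
  - intros h Jh; apply (kendall_tau_A_le_upper F G); assumption.
  - exists (pmf_upper F G); split; [apply is_joint_pmf_upper|]; auto.
Qed.

Lemma tau_A_min_lower F G v : is_cdf F -> is_cdf G ->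
  kendall_tau_A (pmf_lower F G) = v -> tau_A_min F G v.
Proof.
  intros HF HG <-; split.
  - intros h Jh; apply (kendall_tau_A_ge_lower F G); assumption.
  - exists (pmf_lower F G); split; [apply is_joint_pmf_lower|]; auto.
Qed.

Lemma cdf_pos_index F s : is_cdf F -> 0 < F s -> exists n, s = Z.of_nat n.
Proof.
  intros HF Hs; exists (Z.to_nat s).
  destruct (Z_lt_le_dec s 0) as [Hneg|]; [rewrite (cdf_neg F HF s Hneg) in Hs; lra|lia].
Qed.

Lemma zi_cdf_is_cdf pi f : 0 <= pi <= 1 -> is_pmf f -> is_cdf (zi_cdf pi (cdf_of_pmf f)).
Proof.
  intros Hpi [f_ge0 Hf].
  assert (Hnat : forall n, zi_cdf pi (cdf_of_pmf f) (Z.of_nat n) = (1 - pi) + pi * sum_n f n).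
  { intro n; unfold zi_cdf, cdf_of_pmf; destruct (Z.ltb_spec (Z.of_nat n) 0); [lia|].
    rewrite Nat2Z.id; reflexivity. }
  split; [|split].
  - intros s Hs; unfold zi_cdf; destruct (Z.ltb_spec s 0); [reflexivity|lia].
  - intros s t Hst; destruct (Z_lt_le_dec s 0) as [Hs|Hs].
    + unfold zi_cdf at 1; destruct (Z.ltb_spec s 0); [|lia].
      destruct (Z_lt_le_dec t 0); [unfold zi_cdf; destruct (Z.ltb_spec t 0); lra || lia|].
      rewrite <- (Z2Nat.id t), Hnat by lia; pose proof (sum_n_nonneg f (Z.to_nat t) f_ge0); nra.
    + rewrite <- (Z2Nat.id s), <- (Z2Nat.id t), !Hnat by lia.
      pose proof (sum_n_le_sum_n f (Z.to_nat s) (Z.to_nat t) f_ge0 ltac:(lia)); nra.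
  - apply (is_lim_seq_ext _ _ _ (fun n => eq_sym (Hnat n))).
    replace (Finite 1) with (Finite ((1 - pi) + pi * 1)) by (f_equal; ring).
    apply is_lim_seq_plus'; [apply is_lim_seq_const|].
    exact (is_lim_seq_scal_l _ pi 1 (Hf : is_lim_seq (sum_n f) 1)).
Qed.

Theorem proposition1 (piF piG : R) (fbar gbar : nat -> R) :
  0 <= piF <= 1 -> 0 <= piG <= 1 -> is_pmf fbar -> is_pmf gbar ->
  let F := zi_cdf piF (cdf_of_pmf fbar) in
  let G := zi_cdf piG (cdf_of_pmf gbar) in
  let p1 := F 0%Z in
  let p2 := G 0%Z in
  let pU := cond_tie_prob (pmf_of_cdf2 (frechet_upper F G)) in
  let pL := cond_tie_prob (pmf_of_cdf2 (frechet_lower F G)) in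
  (p1 <= p2 ->
     forall s : Z, F s > p2 -> F (s - 1)%Z <= p2 ->
     tau_A_max F G ((1 - p2 ^ 2) - (1 - p2) ^ 2 * pU
                    - 2 * (p2 - F (s - 1)%Z) * (F s - p2))) /\
  (p1 >= p2 ->
     forall t : Z, G t > p1 -> G (t - 1)%Z <= p1 ->
     tau_A_max F G ((1 - p1 ^ 2) - (1 - p1) ^ 2 * pU
                    - 2 * (p1 - G (t - 1)%Z) * (G t - p1))) /\
  (1 - p1 - p2 < 0 ->
     tau_A_min F G (- 2 * (1 - p1) * (1 - p2))) /\
  (1 - p1 - p2 > 0 ->
     forall s' t' : Z,
     F s' + p2 - 1 > 0 -> F (s' - 1)%Z + p2 - 1 <= 0 ->
     G t' + p1 - 1 > 0 -> G (t' - 1)%Z + p1 - 1 <= 0 ->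
     tau_A_min F G (p1 ^ 2 + p2 ^ 2 - 1 + (1 - p1 - p2) ^ 2 * pL
        + 2 * ((F s' + p2 - 1) * (1 - p2 - F (s' - 1)%Z)
               + (G t' + p1 - 1) * (1 - p1 - G (t' - 1)%Z)))).
Proof.
  intros HpiF HpiG Hf Hg F G p1 p2 pU pL; subst p1 p2 pU pL.
  assert (HF : is_cdf F) by (apply zi_cdf_is_cdf; assumption).
  assert (HG : is_cdf G) by (apply zi_cdf_is_cdf; assumption).
  pose proof (cdf_ge0 F HF 0) as F0_ge0; pose proof (cdf_ge0 G HG 0) as G0_ge0.
  split; [|split; [|split]].
  - intros H12 s Hs Hs1; destruct (cdf_pos_index F s HF) as [n ->]; [lra|].
    apply tau_A_max_upper, kendall_tau_A_upper_value; auto.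
  - intros H21 t Ht Ht1; destruct (cdf_pos_index G t HG) as [n ->]; [lra|].
    apply tau_A_max_upper, kendall_tau_A_upper_value_transposed; auto; lra.
  - intro Hheavy; apply tau_A_min_lower, kendall_tau_A_lower_value_heavy; auto; lra.
  - intros Hlight s' t' Hs Hs1 Ht Ht1.
    destruct (cdf_pos_index F s' HF) as [n ->]; [lra|].
    destruct (cdf_pos_index G t' HG) as [k ->]; [lra|].
    apply tau_A_min_lower, kendall_tau_A_lower_value_light; auto; lra.
Qed.
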